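(* Consider the delay differential system \[ \begin{aligned} \dot S_h(t)&=\beta_h-C_{vh}\frac{I_v(t)}{N_v(t)}S_h(t)-\mu_hS_h(t),\\ \dot I_h(t)&=C_{vh}\frac{I_v(t-\tau)}{N_v(t-\tau)}S_h(t-\tau)-\mu_hI_h(t),\\ \dot S_v(t)&=\beta_v-C_{hv}I_h(t)S_v(t)-\mu_vS_v(t),\\ \dot I_v(t)&=C_{hv}I_h(t)S_v(t)-\mu_vI_v(t), \end{aligned} \] where $N_v(t)=S_v(t)+I_v(t)$, the parameters $\beta_h,\beta_v,\mu_h,\mu_v,C_{vh},C_{hv}$ are positive and $\tau\ge 0$. For every initial function $\varphi\in C_+$, the solution $x(t)=(S_h(t),I_h(t),S_v(t),I_v(t))^T$ of this system through $\varphi$ exists on $[0,\infty)$, is unique, nonnegative, and ultimately bounded on $[0,\infty)$.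
   Context: $C=C([-\tau,0],\mathbb{R}_+^4)$ with the sup-norm, $\mathbb{R}_+=[0,\infty)$, and the phase space is $C_+=\{\varphi=(\varphi_1,\varphi_2,\varphi_3,\varphi_4)^T\in C:\ \varphi_3(\theta)+\varphi_4(\theta)>0 \text{ for all }\theta\in[-\tau,0]\}$. The solution through $\varphi$ satisfies $x(\theta)=\varphi(\theta)$ for $\theta\in[-\tau,0]$. *)

From Stdlib Require Import Reals.
Open Scope R_scope.

Record traj : Type := mkTraj {
  Sh : R -> R; Ih : R -> R; Sv : R -> R; Iv : R -> R }.

Definition cont_on_interval (a b : R) (f : R -> R) : Prop :=
  forall t, a <= t <= b -> forall eps, 0 < eps ->
    exists delta, 0 < delta /\
      forall s, a <= s <= b -> Rabs (s - t) < delta -> Rabs (f s - f t) < eps.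

Definition cont_on_from (a : R) (f : R -> R) : Prop :=
  forall t, a <= t -> forall eps, 0 < eps ->
    exists delta, 0 < delta /\
      forall s, a <= s -> Rabs (s - t) < delta -> Rabs (f s - f t) < eps.

(* phi belongs to C_+ : continuous on [-tau,0] with values in R_+^4 and
   phi_3 + phi_4 > 0 on [-tau,0] (values outside [-tau,0] are irrelevant). *)
Definition in_Cplus (tau : R) (phi : traj) : Prop :=
  cont_on_interval (- tau) 0 (Sh phi) /\ cont_on_interval (- tau) 0 (Ih phi) /\
  cont_on_interval (- tau) 0 (Sv phi) /\ cont_on_interval (- tau) 0 (Iv phi) /\
  (forall th, - tau <= th <= 0 ->
     0 <= Sh phi th /\ 0 <= Ih phi th /\ 0 <= Sv phi th /\ 0 <= Iv phi th /\
     0 < Sv phi th + Iv phi th).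

(* x is a solution on [0, +oo) of the delay system through phi:
   x = phi on [-tau, 0], x continuous on [-tau, +oo), N_v = S_v + I_v never
   vanishes on [-tau, +oo) (domain of the vector field), and the equations hold
   for every t > 0. *)
Definition is_solution (bh bv mh mv Cvh Chv tau : R) (phi x : traj) : Prop :=
  (forall th, - tau <= th <= 0 ->
     Sh x th = Sh phi th /\ Ih x th = Ih phi th /\
     Sv x th = Sv phi th /\ Iv x th = Iv phi th) /\
  cont_on_from (- tau) (Sh x) /\ cont_on_from (- tau) (Ih x) /\
  cont_on_from (- tau) (Sv x) /\ cont_on_from (- tau) (Iv x) /\
  (forall t, - tau <= t -> Sv x t + Iv x t <> 0) /\
  (forall t, 0 < t ->
     derivable_pt_lim (Sh x) t
       (bh - Cvh * (Iv x t / (Sv x t + Iv x t)) * Sh x t - mh * Sh x t) /\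
     derivable_pt_lim (Ih x) t
       (Cvh * (Iv x (t - tau) / (Sv x (t - tau) + Iv x (t - tau))) * Sh x (t - tau)
        - mh * Ih x t) /\
     derivable_pt_lim (Sv x) t
       (bv - Chv * Ih x t * Sv x t - mv * Sv x t) /\
     derivable_pt_lim (Iv x) t
       (Chv * Ih x t * Sv x t - mv * Iv x t)).

(* Replacing [N_v = S_v + I_v], which solves [N_v' = bv - mv N_v], by its explicit
   value and truncating the incidence terms at a level [K] makes the vector field
   globally Lipschitz in the present and delayed states, so Picard iteration
   converges in an exponentially weighted sup norm.  Comparison arguments show
   that this solution stays in [[0, K]], hence solves the original system.  Two
   solutions through the same [phi] agree by a stepwise Gronwall argument with
   local Lipschitz bounds, which transfers nonnegativity to every solution.
   Ultimate bounds follow from [S_h' <= bh - mh S_h], [N_v' = bv - mv N_v] and,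
   one delay later, [I_h' <= Cvh (bh / mh + 1) - mh I_h]. *)

From Stdlib Require Import Reals Lra Lia List.
From Coquelicot Require Import Coquelicot.
Import ListNotations.
Open Scope R_scope.

(** * Continuity and comparison on half-lines *)

Lemma continuity_pt_add f g x :
  continuity_pt f x -> continuity_pt g x -> continuity_pt (fun t => f t + g t) x.
Proof. exact (continuity_pt_plus f g x). Qed.

Lemma continuity_pt_sub f g x :
  continuity_pt f x -> continuity_pt g x -> continuity_pt (fun t => f t - g t) x.
Proof. exact (continuity_pt_minus f g x). Qed.

Lemma continuity_pt_mul f g x :
  continuity_pt f x -> continuity_pt g x -> continuity_pt (fun t => f t * g t) x.
Proof. exact (continuity_pt_mult f g x). Qed.

Lemma continuity_pt_quot f g x :
  continuity_pt f x -> continuity_pt g x -> g x <> 0 -> continuity_pt (fun t => f t / g t) x.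
Proof. exact (continuity_pt_div f g x). Qed.

Lemma continuity_pt_cst c x : continuity_pt (fun _ => c) x.
Proof. now apply continuity_pt_const. Qed.

Lemma continuity_pt_compose f g x :
  continuity_pt f x -> continuity_pt g (f x) -> continuity_pt (fun t => g (f t)) x.
Proof. exact (continuity_pt_comp f g x). Qed.

Lemma continuity_pt_exp_scale c z : continuity_pt (fun s => exp (c * s)) z.
Proof.
  apply (continuity_pt_compose (fun s => c * s) exp);
    [apply continuity_pt_mult; [apply continuity_pt_const; now intros|apply continuity_pt_id]|].
  apply derivable_continuous_pt, derivable_pt_exp.
Qed.

Lemma continuity_pt_of_lipschitz g z :
  (forall s t, Rabs (g s - g t) <= Rabs (s - t)) -> continuity_pt g z.
Proof.
  intros Hg eps Heps. exists eps; split; [lra|].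
  intros x [_ Hx]. simpl in *. unfold R_dist in *.
  eapply Rle_lt_trans; [apply Hg|exact Hx].
Qed.

Lemma Rabs_Rmax_sub_le a s t : Rabs (Rmax a s - Rmax a t) <= Rabs (s - t).
Proof.
  unfold Rmax; destruct (Rle_dec a s), (Rle_dec a t); unfold Rabs; repeat destruct Rcase_abs; lra.
Qed.

Lemma Rabs_Rmin_sub_le a s t : Rabs (Rmin a s - Rmin a t) <= Rabs (s - t).
Proof.
  unfold Rmin; destruct (Rle_dec a s), (Rle_dec a t); unfold Rabs; repeat destruct Rcase_abs; lra.
Qed.

Lemma Rmax_Rmin_clamp a b t : a <= b -> a <= Rmax a (Rmin b t) <= b.
Proof. intros Hab. split; [apply Rmax_l|]. apply Rmax_lub; [lra|apply Rmin_l]. Qed.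

Lemma Rmax_Rmin_clamp_id a b t : a <= t <= b -> Rmax a (Rmin b t) = t.
Proof. intros Ht. rewrite Rmin_right by lra. apply Rmax_right; lra. Qed.

Lemma eq_of_Rabs_sub_le0 a b : Rabs (a - b) <= 0 -> a = b.
Proof.
  intros H. apply Rminus_diag_uniq. destruct (Req_dec (a - b) 0) as [ok|Hne]; [exact ok|].
  assert (Hp := Rabs_pos_lt _ Hne). lra.
Qed.

Lemma Rabs_mul_sub_le a b c d M : Rabs a <= M -> Rabs d <= M ->
  Rabs (a * b - c * d) <= M * (Rabs (a - c) + Rabs (b - d)).
Proof.
  intros Ha Hd. replace (a * b - c * d) with (a * (b - d) + d * (a - c)) by ring.
  eapply Rle_trans; [apply Rabs_triang|]. rewrite !Rabs_mult.
  assert (0 <= Rabs (b - d)) by apply Rabs_pos. assert (0 <= Rabs (a - c)) by apply Rabs_pos.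
  nra.
Qed.

(* [cont_on_from a f] says exactly that [f] agrees on [a, +oo) with a function
   continuous everywhere, namely [fun t => f (Rmax a t)]. *)
Lemma continuity_pt_clamp_from a f :
  cont_on_from a f -> forall z, continuity_pt (fun t => f (Rmax a t)) z.
Proof.
  intros Hf z eps Heps.
  destruct (Hf (Rmax a z) (Rmax_l a z) eps Heps) as [d [Hd Hfd]].
  exists d; split; [lra|]. intros x [_ Hx]. simpl in *. unfold R_dist in *.
  apply Hfd; [apply Rmax_l|]. eapply Rle_lt_trans; [apply Rabs_Rmax_sub_le|exact Hx].
Qed.

Lemma cont_on_from_of_continuity a f : (forall z, continuity_pt f z) -> cont_on_from a f.
Proof.
  intros Hf t _ eps Heps. destruct (Hf t eps Heps) as [d [Hd Hfd]].
  exists d; split; [lra|]. intros s _ Hs.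
  destruct (Req_dec s t) as [->|Hne]; [rewrite Rminus_eq_0, Rabs_R0; lra|].
  apply (Hfd s). split; [split; [exact I|auto]|exact Hs].
Qed.

Lemma cont_on_from_of_clamp a f :
  (forall z, continuity_pt (fun t => f (Rmax a t)) z) -> cont_on_from a f.
Proof.
  intros Hf t Ht eps Heps.
  destruct (cont_on_from_of_continuity a _ Hf t Ht eps Heps) as [d [Hd Hfd]].
  exists d; split; [exact Hd|]. intros s Hs Hst. specialize (Hfd s Hs Hst).
  rewrite !Rmax_right in Hfd by lra. exact Hfd.
Qed.

Lemma cont_on_from_mono a b f : a <= b -> cont_on_from a f -> cont_on_from b f.
Proof.
  intros Hab Hf t Ht eps Heps. destruct (Hf t ltac:(lra) eps Heps) as [d [Hd Hfd]].
  exists d; split; [exact Hd|]. intros s Hs Hst. apply Hfd; lra.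
Qed.

Lemma continuity_pt_clamp_interval a b f : a <= b -> cont_on_interval a b f ->
  forall z, continuity_pt (fun t => f (Rmax a (Rmin b t))) z.
Proof.
  intros Hab Hf z eps Heps.
  destruct (Hf _ (Rmax_Rmin_clamp a b z Hab) eps Heps) as [d [Hd Hfd]].
  exists d; split; [lra|]. intros x [_ Hx]. simpl in *. unfold R_dist in *.
  apply Hfd; [now apply Rmax_Rmin_clamp|].
  eapply Rle_lt_trans; [apply Rabs_Rmax_sub_le|].
  eapply Rle_lt_trans; [apply Rabs_Rmin_sub_le|exact Hx].
Qed.

Lemma cont_on_from_bounded a f : cont_on_from a f ->
  forall T, exists M, 0 <= M /\ forall t, a <= t <= T -> Rabs (f t) <= M.
Proof.
  intros Hf T. destruct (Rle_dec a T) as [HaT|HaT].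
  - assert (Hc : forall c, a <= c <= T -> continuity_pt (fun t => Rabs (f (Rmax a t))) c).
    { intros c _. apply (continuity_pt_compose _ Rabs);
        [now apply continuity_pt_clamp_from|apply Rcontinuity_abs]. }
    destruct (continuity_ab_maj _ a T HaT Hc) as [m [Hm _]].
    exists (Rabs (f (Rmax a m))). split; [apply Rabs_pos|]. intros t Ht.
    specialize (Hm t Ht). now rewrite Rmax_right in Hm by lra.
  - exists 0. split; [lra|]. intros t Ht. lra.
Qed.

Lemma cont_on_interval_bounded a b f : a <= b -> cont_on_interval a b f ->
  exists M, forall t, a <= t <= b -> f t <= M.
Proof.
  intros Hab Hf.
  destruct (continuity_ab_maj (fun t => f (Rmax a (Rmin b t))) a b Hab
    (fun c _ => continuity_pt_clamp_interval a b f Hab Hf c)) as [m [Hm _]].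
  exists (f (Rmax a (Rmin b m))). intros t Ht. specialize (Hm t Ht).
  now rewrite Rmax_Rmin_clamp_id in Hm.
Qed.

(* [s] may be the left end [a], where [f] is only right-continuous. *)
Lemma mvt_from f df a s t : cont_on_from a f -> a <= s < t ->
  (forall x, s < x < t -> derivable_pt_lim f x (df x)) ->
  exists xi, s < xi < t /\ f t - f s = df xi * (t - s).
Proof.
  intros Hc Hst Hd.
  set (g := fun x => f (Rmax a x)).
  assert (Hg : forall x, s < x < t -> derivable_pt_lim g x (df x)).
  { intros x Hx. apply is_derive_Reals. apply (is_derive_ext_loc f).
    - exists (mkposreal (x - a) ltac:(simpl; lra)). intros y Hy.
      unfold g. rewrite Rmax_right; [reflexivity|].
      cbn in Hy. unfold AbsRing_ball, abs, minus, plus, opp in Hy. simpl in Hy.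
      apply Rabs_lt_between in Hy. lra.
    - apply is_derive_Reals, Hd, Hx. }
  assert (pr1 : forall c, s < c < t -> derivable_pt g c) by (intros c Hc'; exists (df c); now apply Hg).
  assert (pr2 : forall c, s < c < t -> derivable_pt id c) by (intros c _; apply derivable_pt_id).
  destruct (MVT g id s t pr1 pr2 (proj2 Hst)) as [c [Hc' HMVT]].
  - intros c _. now apply continuity_pt_clamp_from.
  - intros c _. apply derivable_continuous_pt, derivable_pt_id.
  - exists c; split; [exact Hc'|].
    rewrite (derive_pt_eq_0 g c (df c) (pr1 c Hc')) in HMVT by now apply Hg.
    rewrite (derive_pt_eq_0 id c 1 (pr2 c Hc')) in HMVT by apply derivable_pt_lim_id.
    unfold id, g in HMVT. rewrite !Rmax_right in HMVT by lra. lra.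
Qed.

Lemma nonincreasing_of_deriv_nonpos f df a s t : cont_on_from a f -> a <= s <= t ->
  (forall x, s < x < t -> derivable_pt_lim f x (df x)) ->
  (forall x, s < x < t -> df x <= 0) -> f t <= f s.
Proof.
  intros Hc Hst Hd Hneg. destruct (Req_dec s t) as [->|Hne]; [lra|].
  destruct (mvt_from f df a s t Hc ltac:(lra) Hd) as [xi [Hxi E]].
  assert (df xi <= 0) by (apply Hneg; lra). nra.
Qed.

Lemma Rabs_le_of_deriv_bound f df a0 a c K : cont_on_from a0 f -> a0 <= a < c -> f a = 0 ->
  (forall z, a < z < c -> derivable_pt_lim f z (df z)) ->
  (forall z, a < z < c -> Rabs (df z) <= K) -> Rabs (f c) <= K * (c - a).
Proof.
  intros Hc Hac Ha Hd Hb.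
  destruct (mvt_from f df a0 a c Hc Hac Hd) as [xi [Hxi E]].
  rewrite Ha, Rminus_0_r in E. rewrite E, Rabs_mult, (Rabs_right (c - a)) by lra.
  apply Rmult_le_compat_r; [lra|]. now apply Hb.
Qed.

(* On a step of length [1 / (2 L)] the hypothesis gives [sup D <= sup D / 2]. *)
Lemma eq0_of_local_contraction D a0 T L : a0 <= 0 -> 0 < L -> cont_on_from a0 D ->
  (forall s, a0 <= s -> 0 <= D s) -> (forall s, a0 <= s <= 0 -> D s = 0) ->
  (forall a c M, 0 <= a < c -> c <= T -> (forall s, a0 <= s <= a -> D s = 0) ->
     (forall s, a0 <= s <= c -> D s <= M) -> D c <= L * (c - a) * M) ->
  forall t, a0 <= t <= T -> D t = 0.
Proof.
  intros Ha0 HL Hc Hpos Hinit Hstep t Ht.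
  set (h := / (2 * L)). assert (Hh : 0 < h) by (apply Rinv_0_lt_compat; lra).
  assert (Steps : forall k s, a0 <= s <= T -> s <= INR k * h -> D s = 0).
  { induction k as [|k IH]; intros s Hs Hsk.
    { apply Hinit. simpl in Hsk. lra. }
    set (a := INR k * h) in *.
    assert (Ha : 0 <= a) by (apply Rmult_le_pos; [apply pos_INR|lra]).
    destruct (Rle_dec s a) as [Hsa|Hsa]; [now apply IH|]. apply Rnot_le_lt in Hsa.
    assert (Hsk' : s <= a + h) by (rewrite S_INR in Hsk; unfold a; lra).
    set (b := Rmin (a + h) T).
    assert (Hab : a <= b) by (unfold b, Rmin; destruct Rle_dec; lra).
    assert (Hbound : forall c, a <= c <= b -> continuity_pt (fun r => D (Rmax a0 r)) c)
      by (intros; now apply continuity_pt_clamp_from).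
    destruct (continuity_ab_maj _ a b Hab Hbound) as [c [Hmax Hc']].
    assert (HDmax : forall r, a <= r <= b -> D r <= D c).
    { intros r Hr. specialize (Hmax r Hr). now rewrite !Rmax_right in Hmax by lra. }
    assert (HDa : forall r, a0 <= r <= a -> D r = 0) by (intros r Hr; apply IH; lra).
    assert (HDc : D c <= 0).
    { destruct (Req_dec c a) as [->|Hca]; [rewrite (HDa a); lra|].
      assert (Hcb : c <= a + h /\ c <= T) by (split; eapply Rle_trans;
        [|apply Rmin_l| |apply Rmin_r]; apply Hc').
      assert (Hsup : forall r, a0 <= r <= c -> D r <= D c).
      { intros r Hr. destruct (Rle_dec r a); [rewrite HDa by lra; apply Hpos; lra|].
        apply HDmax. lra. }
      assert (Hle := Hstep a c (D c) ltac:(lra) ltac:(lra) HDa Hsup).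
      assert (0 <= D c) by (apply Hpos; lra).
      assert (L * (c - a) <= / 2) by (replace (/ 2) with (L * h) by (unfold h; field; lra); nra).
      nra. }
    assert (Hsb : s <= b) by (unfold b, Rmin; destruct Rle_dec; lra).
    assert (D s <= D c) by (apply HDmax; lra). assert (0 <= D s) by (apply Hpos; lra). lra. }
  destruct (INR_unbounded (t / h)) as [k Hk].
  apply (Steps k t Ht).
  apply (Rmult_lt_compat_r h) in Hk; [|exact Hh].
  replace (t / h * h) with t in Hk by (field; lra). lra.
Qed.

Lemma stays_above f df a c t : cont_on_from a f ->
  (forall x, a < x -> derivable_pt_lim f x (df x)) ->
  c <= f a -> (forall x, a < x -> f x < c -> 0 <= df x) -> a <= t -> c <= f t.
Proof.
  intros Hc Hd Ha Hder Hat.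
  destruct (Rle_dec c (f t)) as [ok|Hlt]; [exact ok|exfalso]. apply Rnot_le_lt in Hlt.
  set (E := fun s => a <= s <= t /\ c <= f s).
  destruct (completeness E) as [m [Hub Hlub]].
  { exists t. intros s [Hs _]. lra. }
  { exists a. split; [lra|exact Ha]. }
  assert (Ham : a <= m) by (apply Hub; split; [lra|exact Ha]).
  assert (Hmt : m <= t) by (apply Hlub; intros s [Hs _]; lra).
  assert (Hfm : c <= f m).
  { destruct (Rle_dec c (f m)) as [ok|Hn]; [exact ok|exfalso]. apply Rnot_le_lt in Hn.
    destruct (Hc m Ham (c - f m) ltac:(lra)) as [d [Hd0 Hd1]].
    (* near [m], [f] stays below [c], so [Rmax a (m - d/2)] bounds [E] *)
    assert (Hbound : m <= Rmax a (m - d / 2)).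
    { apply Hlub. intros s [Hs Hcs].
      destruct (Rle_dec s (Rmax a (m - d / 2))) as [ok|Hn2]; [exact ok|exfalso].
      apply Rnot_le_lt in Hn2.
      assert (s <= m) by (apply Hub; split; [lra|exact Hcs]).
      assert (m - d / 2 < s) by (eapply Rle_lt_trans; [apply Rmax_r|exact Hn2]).
      assert (Hsm : Rabs (s - m) < d) by (apply Rabs_def1; lra).
      specialize (Hd1 s ltac:(lra) Hsm). apply Rabs_def2 in Hd1. lra. }
    unfold Rmax in Hbound; destruct Rle_dec in Hbound; [lra|].
    assert (m = a) by lra. subst m. lra. }
  assert (Hmlt : m < t) by (destruct (Req_dec m t); [subst; lra|lra]).
  destruct (mvt_from f df a m t Hc ltac:(lra) ltac:(intros x Hx; apply Hd; lra))
    as [xi [Hxi Eq]].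
  assert (Hfx : f xi < c).
  { destruct (Rlt_dec (f xi) c) as [ok|Hn]; [exact ok|exfalso]. apply Rnot_lt_le in Hn.
    assert (xi <= m) by (apply Hub; split; [lra|exact Hn]). lra. }
  specialize (Hder xi ltac:(lra) Hfx). nra.
Qed.

Lemma stays_below f df a c t : cont_on_from a f ->
  (forall x, a < x -> derivable_pt_lim f x (df x)) ->
  f a <= c -> (forall x, a < x -> c < f x -> df x <= 0) -> a <= t -> f t <= c.
Proof.
  intros Hc Hd Ha Hder Hat.
  enough (- c <= - f t) by lra.
  apply (stays_above (fun x => - f x) (fun x => - df x) a (- c) t); [| |lra| |exact Hat].
  - intros s Hs eps He. destruct (Hc s Hs eps He) as [d [Hd0 Hd1]]. exists d; split; [lra|].
    intros r Hr Hr'. rewrite <- Rabs_Ropp. replace (- (- f r - - f s)) with (f r - f s) by ring.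
    now apply Hd1.
  - intros x Hx. now apply derivable_pt_lim_opp, Hd.
  - intros x Hx Hlt. specialize (Hder x Hx ltac:(lra)). lra.
Qed.

Lemma eq0_of_linear_deriv w m t : 0 <= m -> cont_on_from 0 w ->
  (forall s, 0 < s -> derivable_pt_lim w s (- m * w s)) -> w 0 = 0 -> 0 <= t -> w t = 0.
Proof.
  intros Hm Hc Hd H0 Ht.
  assert (0 <= w t).
  { apply (stays_above w (fun s => - m * w s) 0 0 t); auto; [lra|]. intros s _ Hs. nra. }
  assert (w t <= 0).
  { apply (stays_below w (fun s => - m * w s) 0 0 t); auto; [lra|]. intros s _ Hs. nra. }
  lra.
Qed.

Lemma exp_weight_deriv f df m k t : derivable_pt_lim f t df ->
  derivable_pt_lim (fun y => (f y - k) * exp (m * y)) t ((df + m * (f t - k)) * exp (m * t)).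
Proof.
  intros H. apply is_derive_Reals in H. apply is_derive_Reals.
  auto_derive; [now exists df|].
  replace (Derive (fun x => f x) t) with df by (symmetry; now apply is_derive_unique). ring.
Qed.

Lemma ultimately_le_of_dissipative f df m k T0 K0 t : 0 < m -> 0 <= K0 ->
  cont_on_from T0 f -> (forall y, T0 < y -> derivable_pt_lim f y (df y)) ->
  (forall y, T0 < y -> df y <= m * (k - f y)) -> f T0 - k <= K0 -> T0 + K0 / m <= t ->
  f t <= k + 1.
Proof.
  intros Hm HK0 Hc Hd Hdiss HT0 Ht.
  assert (HK0m : 0 <= K0 / m) by (apply Rdiv_le_0_compat; lra).
  set (w := fun y => (f y - k) * exp (m * y)).
  assert (Hw : w t <= w T0).
  { apply (nonincreasing_of_deriv_nonpos w (fun y => (df y + m * (f y - k)) * exp (m * y)) T0);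
      [|lra| |].
    - apply cont_on_from_of_clamp. intros z. unfold w.
      apply continuity_pt_mul; [apply continuity_pt_sub;
        [now apply continuity_pt_clamp_from|apply continuity_pt_cst]|].
      apply (continuity_pt_compose (fun y => Rmax T0 y) (fun y => exp (m * y)));
        [apply continuity_pt_of_lipschitz, Rabs_Rmax_sub_le|apply continuity_pt_exp_scale].
    - intros y Hy. apply exp_weight_deriv, Hd. lra.
    - intros y Hy. assert (Hy' := Hdiss y ltac:(lra)). assert (He := exp_pos (m * y)). nra. }
  unfold w in Hw.
  assert (E : exp (m * t) = exp (m * (t - T0)) * exp (m * T0)) by (rewrite <- exp_plus; f_equal; ring).
  assert (Hbig : 1 + K0 <= exp (m * (t - T0))).
  { eapply Rle_trans; [|apply exp_ineq1_le].
    enough (K0 <= m * (t - T0)) by lra.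
    apply (Rmult_le_compat_l m) in Ht; [|lra].
    replace (m * (T0 + K0 / m)) with (m * T0 + K0) in Ht by (field; lra). lra. }
  assert (HeT0 := exp_pos (m * T0)).
  assert (Hw' : (f t - k) * exp (m * (t - T0)) <= K0).
  { rewrite E in Hw. apply (Rmult_le_reg_r (exp (m * T0))); [exact HeT0|]. nra. }
  destruct (Rle_dec (f t) (k + 1)) as [ok|Hn]; [exact ok|exfalso]. nra.
Qed.

(** * Integrals and geometric sequences *)

Lemma continuous_of_continuity_pt f x : continuity_pt f x -> continuous f x.
Proof. now intros H; apply continuity_pt_filterlim in H. Qed.

Lemma ex_RInt_of_continuity g a b : (forall s, continuity_pt g s) -> ex_RInt g a b.
Proof.
  intros H. apply (ex_RInt_continuous (V := R_CompleteNormedModule)).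
  intros z _. apply continuous_of_continuity_pt, H.
Qed.

Lemma RInt_point0 g : RInt g 0 0 = 0.
Proof. now rewrite RInt_point. Qed.

Lemma derivable_pt_lim_RInt g t : (forall s, continuity_pt g s) ->
  derivable_pt_lim (fun y => RInt g 0 y) t (g t).
Proof.
  intros H. apply is_derive_Reals, (is_derive_RInt g (fun y => RInt g 0 y) 0 t).
  - apply filter_forall. intros b.
    apply (@RInt_correct R_CompleteNormedModule), ex_RInt_of_continuity, H.
  - apply continuous_of_continuity_pt, H.
Qed.

Lemma continuity_pt_RInt_from0 g z : (forall s, continuity_pt g s) ->
  continuity_pt (fun t => RInt g 0 (Rmax 0 t)) z.
Proof.
  intros H. apply (continuity_pt_compose (fun t => Rmax 0 t) (fun y => RInt g 0 y)).
  - apply continuity_pt_of_lipschitz, Rabs_Rmax_sub_le.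
  - apply derivable_continuous_pt. exists (g (Rmax 0 z)). now apply derivable_pt_lim_RInt.
Qed.

(* Bielecki-type estimate: relative to the weight [e^(c t)], integration gains
   the factor [1 / c] uniformly in [t]. *)
Lemma Rabs_RInt_le_exp g M c t : (forall s, continuity_pt g s) -> 0 < c -> 0 <= M ->
  (forall s, 0 <= s -> Rabs (g s) <= M * exp (c * s)) ->
  Rabs (RInt g 0 (Rmax 0 t)) <= M * exp (c * t) / c.
Proof.
  intros Hg Hc HM Hb.
  assert (Hpos : 0 <= M * exp (c * t) / c).
  { apply Rdiv_le_0_compat; [|lra]. apply Rmult_le_pos; [lra|left; apply exp_pos]. }
  destruct (Rle_dec t 0) as [Ht|Ht].
  { now rewrite Rmax_left, RInt_point0, Rabs_R0 by lra. }
  rewrite Rmax_right by lra.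
  assert (Hint : RInt (fun s => M * exp (c * s)) 0 t = M * (exp (c * t) - 1) / c).
  { apply is_RInt_unique.
    replace (M * (exp (c * t) - 1) / c) with (minus (M / c * exp (c * t)) (M / c * exp (c * 0))).
    2:{ unfold minus, plus, opp; simpl. rewrite Rmult_0_r, exp_0. field. lra. }
    apply (is_RInt_derive (fun s => M / c * exp (c * s))).
    - intros x _. auto_derive; [exact I|]. field. lra.
    - intros x _. apply continuous_of_continuity_pt, continuity_pt_mul;
        [apply continuity_pt_cst|apply continuity_pt_exp_scale]. }
  eapply Rle_trans; [apply abs_RInt_le; [lra|now apply ex_RInt_of_continuity]|].
  eapply Rle_trans; [apply RInt_le with (g := fun s => M * exp (c * s)); [lra| | |]|].
  - apply ex_RInt_of_continuity. intros s.
    apply (continuity_pt_compose g Rabs); [apply Hg|apply Rcontinuity_abs].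
  - apply ex_RInt_of_continuity. intros s.
    apply continuity_pt_mul; [apply continuity_pt_cst|apply continuity_pt_exp_scale].
  - intros x Hx. apply Hb. lra.
  - rewrite Hint. assert (0 <= M / c) by (apply Rdiv_le_0_compat; lra).
    unfold Rdiv. nra.
Qed.

Lemma derivable_pt_lim_of_RInt_eq u g c t : (forall s, continuity_pt g s) -> 0 < t ->
  (forall y, 0 <= y -> u y = c + RInt g 0 y) -> derivable_pt_lim u t (g t).
Proof.
  intros Hg Ht Hu. apply is_derive_Reals.
  apply (is_derive_ext_loc (fun y => c + RInt g 0 y)).
  - exists (mkposreal t Ht). intros y Hy.
    cbn in Hy. unfold AbsRing_ball, abs, minus, plus, opp in Hy. simpl in Hy.
    apply Rabs_lt_between in Hy. symmetry. apply Hu. lra.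
  - apply is_derive_Reals. replace (g t) with (0 + g t) by ring.
    apply (derivable_pt_lim_plus (fun _ => c)); [apply derivable_pt_lim_const|].
    now apply derivable_pt_lim_RInt.
Qed.

Lemma exp_le_compat x y : x <= y -> exp x <= exp y.
Proof. intros [H| ->]; [left; now apply exp_increasing|lra]. Qed.

Lemma half_pow_small C eps : 0 < eps -> exists N, C * (/ 2) ^ N < eps.
Proof.
  intros He. destruct (Rle_dec C 0) as [HC|HC].
  - exists 0%nat. simpl. lra.
  - destruct (pow_lt_1_zero (/ 2) ltac:(rewrite Rabs_right; lra) (eps / C)
      ltac:(apply Rdiv_lt_0_compat; lra)) as [N HN].
    exists N. specialize (HN N (le_n N)).
    rewrite Rabs_right in HN by (left; apply pow_lt; lra).
    apply (Rmult_lt_compat_l C) in HN; [|lra].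
    replace (C * (eps / C)) with eps in HN by (field; lra). exact HN.
Qed.

Lemma eq0_of_geom_bound z C : (forall k, Rabs z <= C * (/ 2) ^ k) -> z = 0.
Proof.
  intros H. destruct (Req_dec z 0) as [ok|Hne]; [exact ok|exfalso].
  destruct (half_pow_small C (Rabs z) (Rabs_pos_lt z Hne)) as [N HN].
  specialize (H N). lra.
Qed.

Lemma geom_tail_le (x : nat -> R) C : 0 <= C ->
  (forall k, Rabs (x (S k) - x k) <= C * (/ 2) ^ k) ->
  forall k n, (k <= n)%nat -> Rabs (x n - x k) <= 2 * C * (/ 2) ^ k.
Proof.
  intros HC H k n Hkn. replace n with (k + (n - k))%nat by lia.
  assert (Htail : forall m, Rabs (x (k + m)%nat - x k) <= 2 * C * ((/ 2) ^ k - (/ 2) ^ (k + m))).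
  { induction m as [|m IH].
    - rewrite Nat.add_0_r, Rminus_eq_0, Rabs_R0. lra.
    - rewrite Nat.add_succ_r.
      replace (x (S (k + m)) - x k)
        with ((x (S (k + m)) - x (k + m)%nat) + (x (k + m)%nat - x k)) by ring.
      eapply Rle_trans; [apply Rabs_triang|]. specialize (H (k + m)%nat). simpl pow. lra. }
  eapply Rle_trans; [apply Htail|].
  assert (0 < (/ 2) ^ (k + (n - k))) by (apply pow_lt; lra). nra.
Qed.

Lemma geom_limit (x : nat -> R) C : 0 <= C ->
  (forall k, Rabs (x (S k) - x k) <= C * (/ 2) ^ k) ->
  { l | forall k, Rabs (x k - l) <= 2 * C * (/ 2) ^ k }.
Proof.
  intros HC H.
  assert (Hcauchy : Cauchy_crit x).
  { intros eps He. destruct (half_pow_small (4 * C) eps He) as [N HN]. exists N.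
    intros n m Hn Hm. unfold Rdist.
    replace (x n - x m) with ((x n - x N) + - (x m - x N)) by ring.
    eapply Rle_lt_trans; [apply Rabs_triang|]. rewrite Rabs_Ropp.
    assert (A1 := geom_tail_le x C HC H N n Hn). assert (A2 := geom_tail_le x C HC H N m Hm).
    lra. }
  destruct (Rcomplete.R_complete x Hcauchy) as [l Hl]. exists l. intros k.
  destruct (Rle_dec (Rabs (x k - l)) (2 * C * (/ 2) ^ k)) as [ok|Hn]; [exact ok|exfalso].
  apply Rnot_le_lt in Hn.
  destruct (Hl (Rabs (x k - l) - 2 * C * (/ 2) ^ k) ltac:(lra)) as [N HN].
  specialize (HN (max N k) (Nat.le_max_l _ _)). unfold Rdist in HN.
  assert (A := geom_tail_le x C HC H k (max N k) (Nat.le_max_r _ _)).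
  assert (B := Rabs_triang (x k - x (max N k)) (x (max N k) - l)).
  replace (x k - x (max N k) + (x (max N k) - l)) with (x k - l) in B by ring.
  rewrite <- Rabs_Ropp in A. replace (- (x (max N k) - x k)) with (x k - x (max N k)) in A by ring.
  lra.
Qed.

Lemma continuity_pt_of_geom_approx (fk : nat -> R -> R) f B c : 0 <= B -> 0 < c ->
  (forall k z, continuity_pt (fk k) z) ->
  (forall k t, Rabs (fk k t - f t) <= B * exp (c * t) * (/ 2) ^ k) ->
  forall z, continuity_pt f z.
Proof.
  intros HB Hc Hk Hb z eps He.
  set (C := B * exp (c * (Rabs z + 1))).
  destruct (half_pow_small C (eps / 3) ltac:(lra)) as [N HN].
  destruct (Hk N z (eps / 3) ltac:(lra)) as [d [Hd Hd']].
  exists (Rmin d 1). split; [apply Rmin_Rgt_r; split; lra|].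
  intros x [Hx1 Hx2]. simpl in *. unfold R_dist in *.
  assert (Hxd : Rabs (x - z) < d) by (eapply Rlt_le_trans; [exact Hx2|apply Rmin_l]).
  assert (Hx1' : Rabs (x - z) < 1) by (eapply Rlt_le_trans; [exact Hx2|apply Rmin_r]).
  specialize (Hd' x (conj Hx1 Hxd)). simpl in Hd'. unfold R_dist in Hd'.
  assert (Hnear : forall y, Rabs (y - z) < 1 -> B * exp (c * y) * (/ 2) ^ N <= C * (/ 2) ^ N).
  { intros y Hy. unfold C. apply Rmult_le_compat_r; [left; apply pow_lt; lra|].
    apply Rmult_le_compat_l; [exact HB|]. apply exp_le_compat, Rmult_le_compat_l; [lra|].
    apply Rabs_lt_between in Hy. unfold Rabs; destruct Rcase_abs; lra. }
  assert (E1 := Hb N x). assert (E2 := Hb N z).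
  assert (F1 := Hnear x Hx1'). assert (F2 := Hnear z ltac:(rewrite Rminus_eq_0, Rabs_R0; lra)).
  replace (f x - f z) with (- (fk N x - f x) + (fk N x - fk N z) + (fk N z - f z)) by ring.
  eapply Rle_lt_trans; [apply Rabs_triang|].
  eapply Rle_lt_trans; [apply Rplus_le_compat_r, Rabs_triang|]. rewrite Rabs_Ropp. lra.
Qed.

(** * Picard iteration for delay integral equations *)

Section VectorDistance.
Context {I : Type} (ix : list I).

Definition vdist (u v : I -> R -> R) s :=
  fold_right Rplus 0 (map (fun i => Rabs (u i s - v i s)) ix).

Lemma vdist_nonneg u v s : 0 <= vdist u v s.
Proof.
  unfold vdist. induction ix as [|j l IH]; simpl; [lra|].
  assert (H := Rabs_pos (u j s - v j s)). lra.
Qed.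

Lemma Rabs_le_vdist u v i s : In i ix -> Rabs (u i s - v i s) <= vdist u v s.
Proof.
  unfold vdist. induction ix as [|j l IH]; simpl; [easy|]. intros [<-|Hi].
  - enough (0 <= fold_right Rplus 0 (map (fun i => Rabs (u i s - v i s)) l)) by lra.
    clear IH. induction l as [|j' l' IH']; simpl; [lra|].
    assert (H := Rabs_pos (u j' s - v j' s)). lra.
  - specialize (IH Hi). assert (H := Rabs_pos (u j s - v j s)). lra.
Qed.

Lemma vdist_le u v s b : (forall i, In i ix -> Rabs (u i s - v i s) <= b) ->
  vdist u v s <= INR (length ix) * b.
Proof.
  unfold vdist. induction ix as [|j l IH]; intros Hb; cbn [fold_right map length]; [simpl; lra|].
  rewrite S_INR. assert (Hj := Hb j (or_introl eq_refl)).
  assert (Hl := IH (fun i Hi => Hb i (or_intror Hi))). lra.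
Qed.

Lemma vdist_continuity u v z :
  (forall i z, continuity_pt (u i) z) -> (forall i z, continuity_pt (v i) z) ->
  continuity_pt (vdist u v) z.
Proof.
  intros Hu Hv. unfold vdist. induction ix as [|j l IH]; simpl; [apply continuity_pt_cst|].
  apply continuity_pt_add; [|exact IH].
  apply (continuity_pt_compose (fun t => u j t - v j t) Rabs); [|apply Rcontinuity_abs].
  now apply continuity_pt_sub.
Qed.

Lemma vdist_cont_on_from a u v : (forall i, cont_on_from a (u i)) -> (forall i, cont_on_from a (v i)) ->
  cont_on_from a (vdist u v).
Proof.
  intros Hu Hv. apply cont_on_from_of_clamp. intros z.
  apply (vdist_continuity (fun i t => u i (Rmax a t)) (fun i t => v i (Rmax a t)));
    intros i; [apply continuity_pt_clamp_from, Hu|apply continuity_pt_clamp_from, Hv].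
Qed.

End VectorDistance.

(* Existence for a delay integral equation [u = x0 + int_0^t F u] whose right-hand
   side is globally Lipschitz with respect to the present and the delayed state:
   the Picard iterates contract in the weighted norm [sup_t e^(-c t) |u t|]. *)
Section DelayPicard.
Variables (I : Type) (ix : list I) (tau L B0 : R).
Hypotheses (ix_full : forall i, In i ix) (Htau : 0 <= tau) (HL : 0 < L) (HB0 : 0 <= B0).
Variable x0 : I -> R -> R.
Hypothesis x0_cont : forall i z, continuity_pt (x0 i) z.
Variable F : (I -> R -> R) -> I -> R -> R.
Hypothesis F_cont :
  forall u, (forall i z, continuity_pt (u i) z) -> forall i z, continuity_pt (F u i) z.
Hypothesis F_lip :
  forall u v i s, Rabs (F u i s - F v i s) <= L * (vdist ix u v s + vdist ix u v (s - tau)).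
Hypothesis F_x0_bounded : forall i s, 0 <= s -> Rabs (F x0 i s) <= B0.

Definition picard (u : I -> R -> R) i t := x0 i t + RInt (F u i) 0 (Rmax 0 t).

Fixpoint picard_iter k := match k with O => x0 | S k => picard (picard_iter k) end.

Let n := INR (length ix).
Let c := 4 * L * (n + 1).
Let A := n * B0 / c.

Let n_nonneg : 0 <= n.
Proof. apply pos_INR. Qed.

Let c_pos : 0 < c.
Proof. assert (H := n_nonneg). unfold c. nra. Qed.

Let A_nonneg : 0 <= A.
Proof. apply Rdiv_le_0_compat; [apply Rmult_le_pos; [apply n_nonneg|lra]|apply c_pos]. Qed.

Lemma picard_cont u : (forall i z, continuity_pt (u i) z) -> forall i z, continuity_pt (picard u i) z.
Proof.
  intros Hu i z. apply continuity_pt_add; [apply x0_cont|].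
  now apply continuity_pt_RInt_from0, F_cont.
Qed.

Lemma picard_iter_cont k : forall i z, continuity_pt (picard_iter k i) z.
Proof. induction k as [|k IH]; [exact x0_cont|now apply picard_cont]. Qed.

Lemma picard_sub_bound u v M t : (forall i z, continuity_pt (u i) z) ->
  (forall i z, continuity_pt (v i) z) -> 0 <= M ->
  (forall i s, 0 <= s -> Rabs (F u i s - F v i s) <= M * exp (c * s)) ->
  vdist ix (picard u) (picard v) t <= n * (M * exp (c * t) / c).
Proof.
  intros Hu Hv HM Hb. apply vdist_le. intros i _. unfold picard.
  set (m := Rmax 0 t).
  replace (x0 i t + RInt (F u i) 0 m - (x0 i t + RInt (F v i) 0 m))
    with (RInt (fun s => F u i s - F v i s) 0 m).
  - apply Rabs_RInt_le_exp; [|apply c_pos|exact HM|exact (Hb i)].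
    intros s. apply continuity_pt_sub; now apply F_cont.
  - rewrite (RInt_minus (V := R_CompleteNormedModule)); [|now apply ex_RInt_of_continuity, F_cont..].
    change (RInt (F u i) 0 m - RInt (F v i) 0 m
            = x0 i t + RInt (F u i) 0 m - (x0 i t + RInt (F v i) 0 m)).
    ring.
Qed.

Lemma picard_iter_step k t :
  vdist ix (picard_iter (S k)) (picard_iter k) t <= A * exp (c * t) * (/ 2) ^ k.
Proof.
  assert (Hc := c_pos). assert (Hn := n_nonneg). assert (HA := A_nonneg).
  revert t. induction k as [|k IH]; intros t.
  - apply (Rle_trans _ (n * (B0 * exp (c * t) / c))); [|right; unfold A; simpl; field; lra].
    apply vdist_le. intros i _. simpl. unfold picard.
    rewrite Rplus_minus_l.
    apply Rabs_RInt_le_exp; [now apply F_cont|exact Hc|exact HB0|].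
    intros s Hs. eapply Rle_trans; [now apply F_x0_bounded|].
    assert (1 <= exp (c * s)) by (rewrite <- exp_0; apply exp_le_compat; nra). nra.
  - assert (Hk := pow_lt (/ 2) k ltac:(lra)).
    assert (HM : 0 <= 2 * L * A * (/ 2) ^ k) by (apply Rmult_le_pos; [nra|lra]).
    apply (Rle_trans _ (n * (2 * L * A * (/ 2) ^ k * exp (c * t) / c))).
    + apply (picard_sub_bound (picard_iter (S k)) (picard_iter k));
        [apply (picard_iter_cont (S k))|apply (picard_iter_cont k)|exact HM|].
      intros i s Hs. eapply Rle_trans; [apply F_lip|].
      assert (I1 := IH s). assert (I2 := IH (s - tau)).
      assert (exp (c * (s - tau)) <= exp (c * s)) by (apply exp_le_compat; nra).
      assert (A * exp (c * (s - tau)) * (/ 2) ^ k <= A * exp (c * s) * (/ 2) ^ k).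
      { apply Rmult_le_compat_r; [lra|]. now apply Rmult_le_compat_l. }
      nra.
    + assert (He := exp_pos (c * t)).
      replace (n * (2 * L * A * (/ 2) ^ k * exp (c * t) / c))
        with (n / (n + 1) * (A * exp (c * t) * (/ 2) ^ S k)) by (unfold c; simpl; field; lra).
      assert (n / (n + 1) <= 1) by (apply Rle_div_l; lra).
      assert (0 <= A * exp (c * t) * (/ 2) ^ S k) by (simpl; apply Rmult_le_pos; [nra|lra]).
      nra.
Qed.

Definition picard_lim i t : R :=
  proj1_sig (geom_limit (fun k => picard_iter k i t) (A * exp (c * t))
    (Rmult_le_pos _ _ A_nonneg (Rlt_le _ _ (exp_pos _)))
    (fun k => Rle_trans _ _ _ (Rabs_le_vdist ix _ _ i t (ix_full i)) (picard_iter_step k t))).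

Lemma picard_lim_approx k i t :
  Rabs (picard_iter k i t - picard_lim i t) <= 2 * A * exp (c * t) * (/ 2) ^ k.
Proof.
  unfold picard_lim. destruct geom_limit as [l Hl]. simpl.
  replace (2 * A * exp (c * t)) with (2 * (A * exp (c * t))) by ring. apply Hl.
Qed.

Lemma picard_lim_cont i z : continuity_pt (picard_lim i) z.
Proof.
  apply (continuity_pt_of_geom_approx (fun k => picard_iter k i) _ (2 * A) c).
  - assert (H := A_nonneg). lra.
  - apply c_pos.
  - intros k. apply picard_iter_cont.
  - intros k t. apply picard_lim_approx.
Qed.

Lemma picard_lim_fixed i t : picard_lim i t = picard picard_lim i t.
Proof.
  assert (Hc := c_pos). assert (Hn := n_nonneg). assert (HA := A_nonneg).
  apply Rminus_diag_uniq, (eq0_of_geom_bound _ ((1 + n * n) * A * exp (c * t))). intros k.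
  assert (Hk := pow_lt (/ 2) k ltac:(lra)). assert (He := exp_pos (c * t)).
  assert (HM : 0 <= 4 * n * L * A * (/ 2) ^ k)
    by (apply Rmult_le_pos; [apply Rmult_le_pos; [nra|exact HA]|lra]).
  replace (picard_lim i t - picard picard_lim i t) with
    (- (picard_iter (S k) i t - picard_lim i t) + (picard (picard_iter k) i t - picard picard_lim i t))
    by (simpl; ring).
  eapply Rle_trans; [apply Rabs_triang|]. rewrite Rabs_Ropp.
  assert (B1 := picard_lim_approx (S k) i t). simpl pow in B1.
  assert (B2 : vdist ix (picard (picard_iter k)) (picard picard_lim) t
      <= n * (4 * n * L * A * (/ 2) ^ k * exp (c * t) / c)).
  { apply (picard_sub_bound (picard_iter k) picard_lim);
      [apply (picard_iter_cont k)|apply picard_lim_cont|exact HM|].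
    intros j s Hs. eapply Rle_trans; [apply F_lip|].
    assert (D : forall r, r <= s ->
      vdist ix (picard_iter k) picard_lim r <= n * (2 * A * exp (c * s) * (/ 2) ^ k)).
    { intros r Hr. apply vdist_le. intros j' _. eapply Rle_trans; [apply picard_lim_approx|].
      repeat apply Rmult_le_compat_r; try lra. apply Rmult_le_compat_l; [lra|].
      apply exp_le_compat. nra. }
    assert (D1 := D s (Rle_refl s)). assert (D2 := D (s - tau) ltac:(lra)). nra. }
  assert (B3 := Rabs_le_vdist ix (picard (picard_iter k)) (picard picard_lim) i t (ix_full i)).
  replace (n * (4 * n * L * A * (/ 2) ^ k * exp (c * t) / c))
    with (n * n / (n + 1) * (A * exp (c * t) * (/ 2) ^ k)) in B2 by (unfold c; field; lra).
  assert (n * n / (n + 1) <= n * n) by (apply Rle_div_l; nra).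
  assert (0 <= A * exp (c * t) * (/ 2) ^ k) by (apply Rmult_le_pos; nra).
  nra.
Qed.

Theorem delay_picard_fixed_point : exists u : I -> R -> R,
  (forall i z, continuity_pt (u i) z) /\ forall i t, u i t = x0 i t + RInt (F u i) 0 (Rmax 0 t).
Proof. exists picard_lim. split; [exact picard_lim_cont|exact picard_lim_fixed]. Qed.

End DelayPicard.

(** * The host-vector model *)

Inductive idx := iSh | iIh | iSv | iIv.

Definition all_idx := [iSh; iIh; iSv; iIv].

Lemma in_all_idx i : In i all_idx.
Proof. destruct i; simpl; tauto. Qed.

Definition coord (x : traj) (i : idx) : R -> R :=
  match i with iSh => Sh x | iIh => Ih x | iSv => Sv x | iIv => Iv x end.

Definition of_coord (u : idx -> R -> R) : traj := mkTraj (u iSh) (u iIh) (u iSv) (u iIv).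

Lemma coord_of_coord u i : coord (of_coord u) i = u i.
Proof. now destruct i. Qed.

Definition dist (x y : traj) : R -> R := vdist all_idx (coord x) (coord y).

Lemma dist_nonneg x y s : 0 <= dist x y s.
Proof. apply vdist_nonneg. Qed.

Lemma Rabs_le_dist x y i s : Rabs (coord x i s - coord y i s) <= dist x y s.
Proof. apply Rabs_le_vdist, in_all_idx. Qed.

Lemma dist_expand x y s : dist x y s =
  Rabs (Sh x s - Sh y s) + Rabs (Ih x s - Ih y s) + Rabs (Sv x s - Sv y s) + Rabs (Iv x s - Iv y s).
Proof. unfold dist, vdist. simpl. ring. Qed.

Lemma Rabs_mass_action_sub_le C a b a' b' N nl M : 0 <= C -> 0 < nl <= N ->
  Rabs a <= M -> Rabs b' <= M ->
  Rabs (C * (a / N) * b - C * (a' / N) * b') <= C * M / nl * (Rabs (a - a') + Rabs (b - b')).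
Proof.
  intros HC HN Ha Hb.
  replace (C * (a / N) * b - C * (a' / N) * b') with (C / N * (a * b - a' * b')) by (field; lra).
  rewrite Rabs_mult, (Rabs_right (C / N)) by (apply Rle_ge, Rdiv_le_0_compat; lra).
  assert (HM := Rabs_mul_sub_le a b a' b' M Ha Hb).
  assert (HCN : C / N <= C / nl) by (apply Rmult_le_compat_l; [lra|apply Rinv_le_contravar; lra]).
  assert (HCN0 : 0 <= C / N) by (apply Rdiv_le_0_compat; lra).
  assert (HD : 0 <= Rabs (a - a') + Rabs (b - b')).
  { assert (Ha' := Rabs_pos (a - a')). assert (Hb' := Rabs_pos (b - b')). lra. }
  assert (HM0 : 0 <= M) by (eapply Rle_trans; [apply Rabs_pos|exact Ha]).
  replace (C * M / nl * (Rabs (a - a') + Rabs (b - b')))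
    with (C / nl * (M * (Rabs (a - a') + Rabs (b - b')))) by (field; lra).
  apply (Rle_trans _ (C / N * (M * (Rabs (a - a') + Rabs (b - b'))))).
  - now apply Rmult_le_compat_l.
  - apply Rmult_le_compat_r; nra.
Qed.




Definition trunc K v := Rmax 0 (Rmin K v).

Lemma trunc_lip K a b : Rabs (trunc K a - trunc K b) <= Rabs (a - b).
Proof. unfold trunc. eapply Rle_trans; [apply Rabs_Rmax_sub_le|apply Rabs_Rmin_sub_le]. Qed.

Lemma trunc_range K a : 0 <= K -> 0 <= trunc K a <= K.
Proof. intros HK. unfold trunc, Rmax, Rmin. repeat destruct Rle_dec; lra. Qed.

Lemma trunc_id K a : 0 <= a <= K -> trunc K a = a.
Proof. intros H. unfold trunc, Rmax, Rmin. repeat destruct Rle_dec; lra. Qed.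

Lemma trunc_nonpos K a : a <= 0 -> trunc K a = 0.
Proof. intros H. unfold trunc, Rmax, Rmin. repeat destruct Rle_dec; lra. Qed.

Lemma trunc_le K a b : 0 <= b -> a <= b -> trunc K a <= b.
Proof. intros H1 H2. unfold trunc, Rmax, Rmin. repeat destruct Rle_dec; lra. Qed.

Lemma continuity_pt_trunc K f z : continuity_pt f z -> continuity_pt (fun t => trunc K (f t)) z.
Proof.
  intros H. apply (continuity_pt_compose f (trunc K)); [exact H|].
  apply continuity_pt_of_lipschitz, trunc_lip.
Qed.

Definition trunc_traj K (x : traj) : traj :=
  mkTraj (fun r => trunc K (Sh x r)) (fun r => trunc K (Ih x r))
         (fun r => trunc K (Sv x r)) (fun r => trunc K (Iv x r)).

Lemma coord_trunc_traj K x i r : coord (trunc_traj K x) i r = trunc K (coord x i r).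
Proof. now destruct i. Qed.

Lemma dist_trunc_traj_le K x y r : dist (trunc_traj K x) (trunc_traj K y) r <= dist x y r.
Proof.
  rewrite !dist_expand. simpl.
  assert (H1 := trunc_lip K (Sh x r) (Sh y r)). assert (H2 := trunc_lip K (Ih x r) (Ih y r)).
  assert (H3 := trunc_lip K (Sv x r) (Sv y r)). assert (H4 := trunc_lip K (Iv x r) (Iv y r)). lra.
Qed.

Section Model.
Variables bh bv mh mv Cvh Chv tau : R.
Hypotheses (Hbh : 0 < bh) (Hbv : 0 < bv) (Hmh : 0 < mh) (Hmv : 0 < mv)
  (HCvh : 0 < Cvh) (HChv : 0 < Chv) (Htau : 0 <= tau).

Local Notation solution := (is_solution bh bv mh mv Cvh Chv tau).

(* The incidence terms [inc_h] (host) and [inc_v] (vector) are parameters, so that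
   the same field serves the original and the truncated system. *)
Definition rhs (inc_h inc_v : R -> R) (x : traj) (i : idx) (s : R) : R :=
  match i with
  | iSh => bh - inc_h s - mh * Sh x s
  | iIh => inc_h (s - tau) - mh * Ih x s
  | iSv => bv - inc_v s - mv * Sv x s
  | iIv => inc_v s - mv * Iv x s
  end.

Definition Nv (x : traj) r := Sv x r + Iv x r.

(* The total vector population [N] is a parameter for the same reason. *)
Definition incidence_h (N : R -> R) (x : traj) r := Cvh * (Iv x r / N r) * Sh x r.
Definition incidence_v (x : traj) r := Chv * Ih x r * Sv x r.

Definition rhs_exact (x : traj) : idx -> R -> R := rhs (incidence_h (Nv x) x) (incidence_v x) x.

Lemma incidence_lipschitz N x y r M nl : 0 < nl <= N r ->
  (forall i, Rabs (coord x i r) <= M) -> (forall i, Rabs (coord y i r) <= M) ->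
  Rabs (incidence_h N x r - incidence_h N y r) <= (Cvh * M / nl + Chv * M) * dist x y r /\
  Rabs (incidence_v x r - incidence_v y r) <= (Cvh * M / nl + Chv * M) * dist x y r.
Proof.
  intros HN Hx Hy. rewrite dist_expand.
  assert (HM : 0 <= M) by (eapply Rle_trans; [apply Rabs_pos|apply (Hx iSh)]).
  assert (HLh : 0 <= Cvh * M / nl) by (apply Rdiv_le_0_compat; nra).
  assert (HLv : 0 <= Chv * M) by nra.
  assert (P1 := Rabs_pos (Sh x r - Sh y r)). assert (P2 := Rabs_pos (Ih x r - Ih y r)).
  assert (P3 := Rabs_pos (Sv x r - Sv y r)). assert (P4 := Rabs_pos (Iv x r - Iv y r)).
  split.
  - unfold incidence_h.
    assert (H := Rabs_mass_action_sub_le Cvh (Iv x r) (Sh x r) (Iv y r) (Sh y r) (N r) nl M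
      ltac:(lra) HN (Hx iIv) (Hy iSh)).
    set (Lh := Cvh * M / nl) in *. set (Lv := Chv * M) in *. nra.
  - unfold incidence_v. rewrite !Rmult_assoc, <- Rmult_minus_distr_l, Rabs_mult, Rabs_right by lra.
    assert (H := Rabs_mul_sub_le (Ih x r) (Sv x r) (Ih y r) (Sv y r) M (Hx iIh) (Hy iSv)).
    set (Lh := Cvh * M / nl) in *. nra.
Qed.

Lemma rhs_lipschitz ih iv ih' iv' x y s Lam : 0 <= Lam ->
  Rabs (ih s - ih' s) <= Lam * dist x y s ->
  Rabs (ih (s - tau) - ih' (s - tau)) <= Lam * dist x y (s - tau) ->
  Rabs (iv s - iv' s) <= Lam * dist x y s ->
  forall i, Rabs (rhs ih iv x i s - rhs ih' iv' y i s)
    <= (Lam + mh + mv) * (dist x y s + dist x y (s - tau)).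
Proof.
  intros HLam H1 H2 H3 i.
  assert (D0 := dist_nonneg x y s). assert (D1 := dist_nonneg x y (s - tau)).
  assert (Hc := fun j => Rabs_le_dist x y j s).
  assert (Hlin : forall m a b, 0 < m -> Rabs (m * a - m * b) = m * Rabs (a - b)).
  { intros m a b Hm. rewrite <- Rmult_minus_distr_l, Rabs_mult, Rabs_right; lra. }
  destruct i; cbn [rhs_exact rhs].
  - assert (Hs := Hc iSh). simpl in Hs.
    replace (bh - ih s - mh * Sh x s - (bh - ih' s - mh * Sh y s))
      with (- (ih s - ih' s) - (mh * Sh x s - mh * Sh y s)) by ring.
    eapply Rle_trans; [apply Rabs_triang|]. rewrite Rabs_Ropp, Rabs_Ropp, Hlin by lra. nra.
  - assert (Hs := Hc iIh). simpl in Hs.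
    replace (ih (s - tau) - mh * Ih x s - (ih' (s - tau) - mh * Ih y s))
      with ((ih (s - tau) - ih' (s - tau)) + - (mh * Ih x s - mh * Ih y s)) by ring.
    eapply Rle_trans; [apply Rabs_triang|]. rewrite Rabs_Ropp, Hlin by lra. nra.
  - assert (Hs := Hc iSv). simpl in Hs.
    replace (bv - iv s - mv * Sv x s - (bv - iv' s - mv * Sv y s))
      with (- (iv s - iv' s) - (mv * Sv x s - mv * Sv y s)) by ring.
    eapply Rle_trans; [apply Rabs_triang|]. rewrite Rabs_Ropp, Rabs_Ropp, Hlin by lra. nra.
  - assert (Hs := Hc iIv). simpl in Hs.
    replace (iv s - mv * Iv x s - (iv' s - mv * Iv y s))
      with ((iv s - iv' s) + - (mv * Iv x s - mv * Iv y s)) by ring.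
    eapply Rle_trans; [apply Rabs_triang|]. rewrite Rabs_Ropp, Hlin by lra. nra.
Qed.

Lemma solution_init phi x : solution phi x ->
  forall i th, - tau <= th <= 0 -> coord x i th = coord phi i th.
Proof. intros [Hi _] i th Hth. destruct (Hi th Hth) as (E1 & E2 & E3 & E4). now destruct i. Qed.

Lemma solution_cont phi x : solution phi x -> forall i, cont_on_from (- tau) (coord x i).
Proof. intros (_ & C1 & C2 & C3 & C4 & _) i. now destruct i. Qed.

Lemma solution_deriv phi x : solution phi x -> forall i t, 0 < t ->
  derivable_pt_lim (coord x i) t (rhs_exact x i t).
Proof.
  intros (_ & _ & _ & _ & _ & _ & Hd) i t Ht. destruct (Hd t Ht) as (D1 & D2 & D3 & D4).
  now destruct i.
Qed.

Definition N0 (phi : traj) := Sv phi 0 + Iv phi 0.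

(* Total vector population [N_v = S_v + I_v] solves [N_v' = bv - mv N_v]. *)
Definition Nv_explicit phi t := bv / mv + (N0 phi - bv / mv) * exp (- mv * t).

Lemma Nv_explicit_deriv phi t : derivable_pt_lim (Nv_explicit phi) t (bv - mv * Nv_explicit phi t).
Proof. apply is_derive_Reals. unfold Nv_explicit. auto_derive; [exact I|]. field. lra. Qed.

Lemma Nv_explicit_cont phi t : continuity_pt (Nv_explicit phi) t.
Proof. apply derivable_continuous_pt. eexists. apply Nv_explicit_deriv. Qed.

Lemma Nv_explicit_0 phi : Nv_explicit phi 0 = N0 phi.
Proof. unfold Nv_explicit. rewrite Rmult_0_r, exp_0. field. lra. Qed.

Lemma Nv_explicit_between phi t : 0 <= t ->
  Rmin (N0 phi) (bv / mv) <= Nv_explicit phi t <= Rmax (N0 phi) (bv / mv).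
Proof.
  intros Ht. unfold Nv_explicit. assert (He : 0 < exp (- mv * t)) by apply exp_pos.
  assert (He1 : exp (- mv * t) <= 1) by (rewrite <- exp_0; apply exp_le_compat; nra).
  unfold Rmin, Rmax; destruct Rle_dec; split; nra.
Qed.

Lemma eq_Nv_explicit phi f t : cont_on_from 0 f ->
  (forall s, 0 < s -> derivable_pt_lim f s (bv - mv * f s)) -> f 0 = N0 phi -> 0 <= t ->
  f t = Nv_explicit phi t.
Proof.
  intros Hc Hd H0 Ht.
  enough (f t - Nv_explicit phi t = 0) by lra.
  apply (eq0_of_linear_deriv (fun s => f s - Nv_explicit phi s) mv);
    [lra| | |rewrite Nv_explicit_0; lra|exact Ht].
  - apply cont_on_from_of_clamp. intros z.
    apply continuity_pt_sub; [now apply continuity_pt_clamp_from|].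
    apply (continuity_pt_compose (fun s => Rmax 0 s));
      [apply continuity_pt_of_lipschitz, Rabs_Rmax_sub_le|apply Nv_explicit_cont].
  - intros s Hs. replace (- mv * (f s - Nv_explicit phi s))
      with (bv - mv * f s - (bv - mv * Nv_explicit phi s)) by ring.
    apply derivable_pt_lim_minus; [now apply Hd|apply Nv_explicit_deriv].
Qed.

Lemma solution_cont_from phi x a : solution phi x -> - tau <= a -> forall i, cont_on_from a (coord x i).
Proof. intros Hx Ha i. apply (cont_on_from_mono (- tau)); [exact Ha|now apply (solution_cont phi)]. Qed.

Lemma solution_Nv_cont phi x a : solution phi x -> - tau <= a -> cont_on_from a (Nv x).
Proof.
  intros Hx Ha. apply cont_on_from_of_clamp. intros z. apply continuity_pt_add;
    apply continuity_pt_clamp_from; [apply (solution_cont_from phi x a Hx Ha iSv)|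
                                     apply (solution_cont_from phi x a Hx Ha iIv)].
Qed.

Lemma solution_Nv_deriv phi x : solution phi x -> forall s, 0 < s ->
  derivable_pt_lim (Nv x) s (bv - mv * Nv x s).
Proof.
  intros Hx s Hs. replace (bv - mv * Nv x s)
    with (rhs_exact x iSv s + rhs_exact x iIv s)
    by (unfold Nv; simpl; ring).
  apply derivable_pt_lim_plus; [apply (solution_deriv phi x Hx iSv)|apply (solution_deriv phi x Hx iIv)];
    exact Hs.
Qed.

Lemma solution_Nv phi x : solution phi x -> forall t, 0 <= t -> Nv x t = Nv_explicit phi t.
Proof.
  intros Hx t Ht. apply (eq_Nv_explicit phi (Nv x)); [apply (solution_Nv_cont phi x 0 Hx); lra
    |exact (solution_Nv_deriv phi x Hx)| |exact Ht].
  exact (f_equal2 Rplus (solution_init phi x Hx iSv 0 ltac:(lra))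
                        (solution_init phi x Hx iIv 0 ltac:(lra))).
Qed.

Lemma solution_Nv_pos phi x : solution phi x -> (forall i t, - tau <= t -> 0 <= coord x i t) ->
  forall t, - tau <= t -> 0 < Nv x t.
Proof.
  intros Hx Hpos t Ht. destruct Hx as (_ & _ & _ & _ & _ & Hne & _).
  assert (H3 := Hpos iSv t Ht). assert (H4 := Hpos iIv t Ht). specialize (Hne t Ht).
  unfold Nv. simpl in H3, H4. lra.
Qed.


Lemma Nv_lower_bound phi : in_Cplus tau phi -> exists nl, 0 < nl /\
  (forall th, - tau <= th <= 0 -> nl <= Nv phi th) /\ (forall t, 0 <= t -> nl <= Nv_explicit phi t).
Proof.
  intros (_ & _ & C3 & C4 & Hp).
  assert (Hc : forall c, - tau <= c <= 0 ->
    continuity_pt (fun t => Sv phi (Rmax (- tau) (Rmin 0 t)) + Iv phi (Rmax (- tau) (Rmin 0 t))) c).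
  { intros c _. apply continuity_pt_add; apply continuity_pt_clamp_interval; auto; lra. }
  destruct (continuity_ab_min _ (- tau) 0 ltac:(lra) Hc) as [m [Hm Hmr]].
  rewrite Rmax_Rmin_clamp_id in Hm by lra.
  assert (HN0 : 0 < N0 phi) by (apply (Hp 0); lra).
  assert (Hmin : 0 < Rmin (N0 phi) (bv / mv)) by (apply Rmin_glb_lt; [lra|apply Rdiv_lt_0_compat; lra]).
  exists (Rmin (Nv phi m) (Rmin (N0 phi) (bv / mv))). split; [|split].
  - apply Rmin_glb_lt; [apply Hp; lra|exact Hmin].
  - intros th Hth. specialize (Hm th Hth). rewrite Rmax_Rmin_clamp_id in Hm by lra.
    eapply Rle_trans; [apply Rmin_l|exact Hm].
  - intros t Ht. eapply Rle_trans; [apply Rmin_r|]. now apply Nv_explicit_between.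
Qed.

Lemma solution_bounded phi x : solution phi x -> forall T, exists M, 0 <= M /\
  forall i s, - tau <= s <= T -> Rabs (coord x i s) <= M.
Proof.
  intros Hx T.
  destruct (cont_on_from_bounded _ _ (solution_cont phi x Hx iSh) T) as [M1 [HM1 B1]].
  destruct (cont_on_from_bounded _ _ (solution_cont phi x Hx iIh) T) as [M2 [HM2 B2]].
  destruct (cont_on_from_bounded _ _ (solution_cont phi x Hx iSv) T) as [M3 [HM3 B3]].
  destruct (cont_on_from_bounded _ _ (solution_cont phi x Hx iIv) T) as [M4 [HM4 B4]].
  exists (M1 + M2 + M3 + M4). split; [lra|]. intros i s Hs.
  destruct i; [specialize (B1 s Hs)|specialize (B2 s Hs)|specialize (B3 s Hs)|specialize (B4 s Hs)]; lra.
Qed.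

Lemma solution_Nv_low phi x nl : solution phi x ->
  (forall th, - tau <= th <= 0 -> nl <= Nv phi th) -> (forall t, 0 <= t -> nl <= Nv_explicit phi t) ->
  forall r, - tau <= r ->
    nl <= Nv x r /\ (r <= 0 -> Nv x r = Nv phi r) /\ (0 <= r -> Nv x r = Nv_explicit phi r).
Proof.
  intros Hx Hl1 Hl2 r Hr.
  assert (Eneg : r <= 0 -> Nv x r = Nv phi r).
  { intros Hr0. exact (f_equal2 Rplus (solution_init phi x Hx iSv r ltac:(lra))
                                     (solution_init phi x Hx iIv r ltac:(lra))). }
  assert (Epos : 0 <= r -> Nv x r = Nv_explicit phi r) by (intros; now apply solution_Nv).
  split; [|tauto]. destruct (Rle_dec r 0).
  - rewrite Eneg by lra. apply Hl1; lra.
  - rewrite Epos by lra. apply Hl2; lra.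
Qed.

Lemma solutions_rhs_lipschitz phi x y nl T M : solution phi x -> solution phi y -> 0 < nl ->
  (forall th, - tau <= th <= 0 -> nl <= Nv phi th) -> (forall t, 0 <= t -> nl <= Nv_explicit phi t) ->
  (forall i s, - tau <= s <= T -> Rabs (coord x i s) <= M) ->
  (forall i s, - tau <= s <= T -> Rabs (coord y i s) <= M) ->
  forall s, 0 < s <= T -> forall j,
    Rabs (rhs_exact x j s - rhs_exact y j s)
      <= (Cvh * M / nl + Chv * M + mh + mv) * (dist x y s + dist x y (s - tau)).
Proof.
  intros Hx Hy Hnl Hl1 Hl2 Bx By s Hs.
  assert (HM : 0 <= M) by (eapply Rle_trans; [apply Rabs_pos|apply (Bx iSh s); lra]).
  assert (HLam : 0 <= Cvh * M / nl + Chv * M)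
    by (assert (0 <= Cvh * M / nl) by (apply Rdiv_le_0_compat; nra); nra).
  assert (Hinc : forall r, - tau <= r <= T ->
    Rabs (incidence_h (Nv x) x r - incidence_h (Nv y) y r) <= (Cvh * M / nl + Chv * M) * dist x y r /\
    Rabs (incidence_v x r - incidence_v y r) <= (Cvh * M / nl + Chv * M) * dist x y r).
  { intros r Hr.
    destruct (solution_Nv_low phi x nl Hx Hl1 Hl2 r ltac:(lra)) as (Hlow & Ex1 & Ex2).
    destruct (solution_Nv_low phi y nl Hy Hl1 Hl2 r ltac:(lra)) as (_ & Ey1 & Ey2).
    assert (ENv : Nv y r = Nv x r) by (destruct (Rle_dec r 0); [rewrite Ex1, Ey1|rewrite Ex2, Ey2]; lra).
    unfold incidence_h at 2. rewrite ENv.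
    apply incidence_lipschitz; [lra|intros j; now apply Bx|intros j; now apply By]. }
  destruct (Hinc s ltac:(lra)) as [Ih0 Iv0]. destruct (Hinc (s - tau) ltac:(lra)) as [Ih1 _].
  now apply rhs_lipschitz.
Qed.

(* Two solutions through the same [phi] coincide: on a compact time interval both
   are bounded, so the vector field is Lipschitz there, and the increment of
   [dist x y] over [a, c] is controlled by [(c - a)] times its supremum. *)
Lemma solution_unique phi x y : in_Cplus tau phi -> solution phi x -> solution phi y ->
  forall i t, - tau <= t -> coord x i t = coord y i t.
Proof.
  intros Hphi Hx Hy i t Ht.
  destruct (Nv_lower_bound phi Hphi) as [nl [Hnl [Hl1 Hl2]]].
  set (T := Rmax 0 t).
  destruct (solution_bounded phi x Hx T) as [Mx [HMx Bx]].
  destruct (solution_bounded phi y Hy T) as [My [HMy By]].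
  set (L := Cvh * (Mx + My) / nl + Chv * (Mx + My) + mh + mv).
  assert (Hlip : forall s, 0 < s <= T -> forall j,
    Rabs (rhs_exact x j s - rhs_exact y j s)
      <= L * (dist x y s + dist x y (s - tau))).
  { apply (solutions_rhs_lipschitz phi); auto; intros j s Hs;
      [specialize (Bx j s Hs)|specialize (By j s Hs)]; lra. }
  assert (HL : 0 < L) by (assert (0 <= Cvh * (Mx + My) / nl) by (apply Rdiv_le_0_compat; nra);
    unfold L; nra).
  assert (HD : dist x y t = 0).
  { apply (eq0_of_local_contraction _ (- tau) T (8 * L)); [lra|lra| | | | |split; [lra|apply Rmax_r]].
    - apply vdist_cont_on_from; [apply (solution_cont phi x Hx)|apply (solution_cont phi y Hy)].
    - intros s _. apply dist_nonneg.
    - intros s Hs. apply Rle_antisym; [|apply dist_nonneg].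
      replace 0 with (INR (length all_idx) * 0) by ring. apply vdist_le. intros j _.
      rewrite (solution_init phi x Hx j s Hs), (solution_init phi y Hy j s Hs), Rminus_eq_0, Rabs_R0.
      lra.
    - intros a c M Hac HcT Hzero Hsup.
      assert (HM : 0 <= M) by (eapply Rle_trans; [apply (dist_nonneg x y a)|apply (Hsup a); lra]).
      replace (8 * L * (c - a) * M) with (INR (length all_idx) * (2 * L * M * (c - a))) by (simpl; ring).
      apply vdist_le. intros j _.
      apply (Rabs_le_of_deriv_bound (fun s => coord x j s - coord y j s)
        (fun s => rhs_exact x j s - rhs_exact y j s) (- tau)); [|lra| | |].
      + apply cont_on_from_of_clamp. intros z.
        apply continuity_pt_sub; apply continuity_pt_clamp_from;
          [apply (solution_cont phi x Hx)|apply (solution_cont phi y Hy)].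
      + apply Rminus_diag_eq, eq_of_Rabs_sub_le0. rewrite <- (Hzero a) by lra. apply Rabs_le_dist.
      + intros z Hz. apply derivable_pt_lim_minus;
          [apply (solution_deriv phi x Hx)|apply (solution_deriv phi y Hy)]; lra.
      + intros z Hz. eapply Rle_trans; [apply Hlip; lra|].
        assert (dist x y z <= M) by (apply Hsup; lra).
        assert (dist x y (z - tau) <= M) by (apply Hsup; lra). nra. }
  apply eq_of_Rabs_sub_le0. rewrite <- HD. apply Rabs_le_dist.
Qed.

Lemma incidence_bound N x r M nl : 0 < nl <= N r -> (forall i, 0 <= coord x i r <= M) ->
  0 <= incidence_h N x r <= Cvh * M / nl * M /\ 0 <= incidence_v x r <= Chv * M * M.
Proof.
  intros HN Hx. assert (H1 := Hx iSh). assert (H2 := Hx iIh).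
  assert (H3 := Hx iSv). assert (H4 := Hx iIv).
  simpl in H1, H2, H3, H4. unfold incidence_h, incidence_v.
  assert (Hq : 0 <= Iv x r / N r <= M / nl).
  { split; [apply Rdiv_le_0_compat; lra|].
    unfold Rdiv. apply Rmult_le_compat; try lra; [left; apply Rinv_0_lt_compat; lra|].
    apply Rinv_le_contravar; lra. }
  replace (Cvh * M / nl * M) with (Cvh * (M / nl) * M) by (unfold Rdiv; ring).
  split; split.
  - apply Rmult_le_pos; [apply Rmult_le_pos|]; lra.
  - apply Rmult_le_compat; [nra|lra|apply Rmult_le_compat_l; lra|lra].
  - apply Rmult_le_pos; [apply Rmult_le_pos|]; lra.
  - apply Rmult_le_compat; [nra|lra|apply Rmult_le_compat_l; lra|lra].
Qed.

Lemma Rabs_rhs_le ih iv x s J B : Rabs (ih s) <= J -> Rabs (ih (s - tau)) <= J -> Rabs (iv s) <= J ->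
  (forall i, Rabs (coord x i s) <= B) -> forall i, Rabs (rhs ih iv x i s) <= bh + bv + J + (mh + mv) * B.
Proof.
  intros H1 H2 H3 Hx i. assert (B1 := Hx iSh). assert (B2 := Hx iIh). assert (B3 := Hx iSv).
  assert (B4 := Hx iIv). simpl in B1, B2, B3, B4.
  assert (Hlin : forall m a, 0 < m -> Rabs a <= B -> Rabs (m * a) <= m * B).
  { intros m a Hm Ha. rewrite Rabs_mult, Rabs_right by lra. now apply Rmult_le_compat_l; [lra|]. }
  assert (HB : 0 <= B) by (eapply Rle_trans; [apply Rabs_pos|exact B1]).
  assert (0 <= mh * B) by nra. assert (0 <= mv * B) by nra.
  destruct i; cbn [rhs_exact rhs].
  - assert (L1 := Hlin mh _ Hmh B1).
    eapply Rle_trans; [apply Rabs_triang|]. rewrite Rabs_Ropp.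
    eapply Rle_trans; [apply Rplus_le_compat_r, Rabs_triang|]. rewrite Rabs_Ropp, Rabs_right by lra. lra.
  - assert (L2 := Hlin mh _ Hmh B2).
    eapply Rle_trans; [apply Rabs_triang|]. rewrite Rabs_Ropp. lra.
  - assert (L3 := Hlin mv _ Hmv B3).
    eapply Rle_trans; [apply Rabs_triang|]. rewrite Rabs_Ropp.
    eapply Rle_trans; [apply Rplus_le_compat_r, Rabs_triang|]. rewrite Rabs_Ropp, Rabs_right by lra. lra.
  - assert (L4 := Hlin mv _ Hmv B4).
    eapply Rle_trans; [apply Rabs_triang|]. rewrite Rabs_Ropp. lra.
Qed.

Section Truncation.
Variable phi : traj.
Hypothesis Hphi : in_Cplus tau phi.
Variables P nl : R.
Hypotheses (HP : forall i th, - tau <= th <= 0 -> coord phi i th <= P) (Hnl : 0 < nl)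
  (Hl1 : forall th, - tau <= th <= 0 -> nl <= Nv phi th)
  (Hl2 : forall t, 0 <= t -> nl <= Nv_explicit phi t).

Definition phi_ext i t := coord phi i (Rmax (- tau) (Rmin 0 t)).

(* The value [N_v] must take along the solution: that of [phi] on [-tau, 0],
   then [Nv_explicit]. *)
Definition Nv_ext t := Nv phi (Rmax (- tau) (Rmin 0 t)) - N0 phi + Nv_explicit phi (Rmax 0 t).

(* A priori bounds for [S_h] ([M1]), [S_v] and [I_v] ([M2]) and [I_h] ([M3]). *)
Definition M1 := Rmax P (bh / mh).
Definition M2 := Rmax (N0 phi) (bv / mv).
Definition M3 := Rmax P (Cvh * M1 / mh).
Definition K := P + M1 + M2 + M3.

Definition rhs_trunc (u : idx -> R -> R) : idx -> R -> R :=
  rhs (incidence_h Nv_ext (trunc_traj K (of_coord u))) (incidence_v (trunc_traj K (of_coord u)))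
      (of_coord u).

Lemma phi_ext_range i t : 0 <= phi_ext i t <= P.
Proof.
  destruct Hphi as (_ & _ & _ & _ & Hpos).
  assert (Ht := Rmax_Rmin_clamp (- tau) 0 t ltac:(lra)).
  split; [|now apply HP]. destruct (Hpos _ Ht) as (A1 & A2 & A3 & A4 & _).
  unfold phi_ext. now destruct i.
Qed.

Lemma phi_ext_cont i z : continuity_pt (phi_ext i) z.
Proof.
  destruct Hphi as (C1 & C2 & C3 & C4 & _). unfold phi_ext.
  destruct i; apply continuity_pt_clamp_interval; auto; lra.
Qed.

Lemma phi_ext_of_nonneg i t : 0 <= t -> phi_ext i t = phi_ext i 0.
Proof. intros Ht. unfold phi_ext. now rewrite !(Rmin_left 0), !Rmax_right by lra. Qed.

Lemma K_facts : 0 <= P /\ P <= M1 /\ bh / mh <= M1 /\ N0 phi <= M2 /\ bv / mv <= M2 /\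
  P <= M3 /\ Cvh * M1 / mh <= M3 /\ M1 <= K /\ M2 <= K /\ M3 <= K /\ P <= K.
Proof.
  assert (HP0 : 0 <= P) by (eapply Rle_trans; [apply (phi_ext_range iSh 0)|apply phi_ext_range]).
  assert (0 <= bv / mv) by (apply Rdiv_le_0_compat; lra).
  assert (P <= M1) by apply Rmax_l. assert (bh / mh <= M1) by apply Rmax_r.
  assert (N0 phi <= M2) by apply Rmax_l. assert (bv / mv <= M2) by apply Rmax_r.
  assert (P <= M3) by apply Rmax_l. assert (Cvh * M1 / mh <= M3) by apply Rmax_r.
  unfold K. repeat split; lra.
Qed.

Lemma Nv_ext_of_nonpos t : t <= 0 -> Nv_ext t = Nv phi (Rmax (- tau) (Rmin 0 t)).
Proof. intros Ht. unfold Nv_ext. rewrite (Rmax_left 0 t), Nv_explicit_0 by lra. ring. Qed.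

Lemma Nv_ext_of_nonneg t : 0 <= t -> Nv_ext t = Nv_explicit phi t.
Proof.
  intros Ht. unfold Nv_ext. rewrite (Rmin_left 0 t), (Rmax_right (- tau) 0), (Rmax_right 0 t) by lra.
  unfold Nv, N0. ring.
Qed.

Lemma Nv_ext_low t : nl <= Nv_ext t.
Proof.
  destruct (Rle_dec t 0) as [Ht|Ht].
  - rewrite Nv_ext_of_nonpos by lra. apply Hl1, Rmax_Rmin_clamp. lra.
  - rewrite Nv_ext_of_nonneg by lra. apply Hl2. lra.
Qed.

Lemma trunc_lip_const_nonneg : 0 <= Cvh * K / nl + Chv * K.
Proof.
  destruct K_facts as (HP0 & _ & _ & _ & _ & _ & _ & _ & _ & _ & HPK).
  assert (0 <= Cvh * K / nl) by (apply Rdiv_le_0_compat; nra). nra.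
Qed.

Lemma Nv_ext_cont z : continuity_pt Nv_ext z.
Proof.
  unfold Nv_ext, Nv. apply continuity_pt_add; [apply continuity_pt_sub; [|apply continuity_pt_cst]|].
  - apply continuity_pt_add; [apply (phi_ext_cont iSv)|apply (phi_ext_cont iIv)].
  - apply (continuity_pt_compose (fun t => Rmax 0 t));
      [apply continuity_pt_of_lipschitz, Rabs_Rmax_sub_le|apply Nv_explicit_cont].
Qed.

Lemma rhs_trunc_cont u :
  (forall i z, continuity_pt (u i) z) -> forall i z, continuity_pt (rhs_trunc u i) z.
Proof.
  intros Hu.
  assert (Hh : forall z, continuity_pt (incidence_h Nv_ext (trunc_traj K (of_coord u))) z).
  { intros z. unfold incidence_h. simpl.
    apply continuity_pt_mul; [apply continuity_pt_mul; [apply continuity_pt_cst|]|];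
      [|apply continuity_pt_trunc, Hu].
    apply continuity_pt_quot; [apply continuity_pt_trunc, Hu|apply Nv_ext_cont|].
    assert (H := Nv_ext_low z). lra. }
  assert (Hv : forall z, continuity_pt (incidence_v (trunc_traj K (of_coord u))) z).
  { intros z. unfold incidence_v. simpl.
    apply continuity_pt_mul; [apply continuity_pt_mul; [apply continuity_pt_cst|]|];
      apply continuity_pt_trunc, Hu. }
  assert (Hlin : forall m j z, continuity_pt (fun s => m * u j s) z)
    by (intros; apply continuity_pt_mul; [apply continuity_pt_cst|apply Hu]).
  intros i z. destruct i; unfold rhs_trunc; simpl rhs;
    repeat apply continuity_pt_sub; try apply continuity_pt_cst; try apply Hh; try apply Hv;
    try apply Hlin.
  apply (continuity_pt_compose (fun s => s - tau)); [|apply Hh].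
  apply continuity_pt_sub; [apply continuity_pt_id|apply continuity_pt_cst].
Qed.

Lemma rhs_trunc_lip u v i s : Rabs (rhs_trunc u i s - rhs_trunc v i s)
  <= (Cvh * K / nl + Chv * K + mh + mv) * (vdist all_idx u v s + vdist all_idx u v (s - tau)).
Proof.
  destruct K_facts as (HP0 & _ & _ & _ & _ & _ & _ & _ & _ & _ & HPK).
  assert (HLam := trunc_lip_const_nonneg).
  assert (Hinc : forall r, Rabs (incidence_h Nv_ext (trunc_traj K (of_coord u)) r
                               - incidence_h Nv_ext (trunc_traj K (of_coord v)) r)
                           <= (Cvh * K / nl + Chv * K) * dist (of_coord u) (of_coord v) r /\
                           Rabs (incidence_v (trunc_traj K (of_coord u)) r
                               - incidence_v (trunc_traj K (of_coord v)) r)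
                           <= (Cvh * K / nl + Chv * K) * dist (of_coord u) (of_coord v) r).
  { intros r.
    assert (Hd := dist_trunc_traj_le K (of_coord u) (of_coord v) r).
    assert (Hb : forall w j, Rabs (coord (trunc_traj K w) j r) <= K).
    { intros w j. rewrite coord_trunc_traj, Rabs_right by (apply Rle_ge, trunc_range; lra).
      apply trunc_range; lra. }
    destruct (incidence_lipschitz Nv_ext (trunc_traj K (of_coord u)) (trunc_traj K (of_coord v)) r K nl
      (conj Hnl (Nv_ext_low r)) (Hb _) (Hb _)) as [H1 H2].
    split; (eapply Rle_trans; [eassumption|]); now apply Rmult_le_compat_l. }
  destruct (Hinc s) as [Ih0 Iv0]. destruct (Hinc (s - tau)) as [Ih1 _].
  exact (rhs_lipschitz _ _ _ _ (of_coord u) (of_coord v) s _ HLam Ih0 Ih1 Iv0 i).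
Qed.

Lemma rhs_trunc_phi_ext_bounded i s :
  Rabs (rhs_trunc phi_ext i s) <= bh + bv + (Cvh * K / nl + Chv * K) * K + (mh + mv) * P.
Proof.
  destruct K_facts as (HP0 & _ & _ & _ & _ & _ & _ & _ & _ & _ & HPK).
  assert (Hinc : forall r, Rabs (incidence_h Nv_ext (trunc_traj K (of_coord phi_ext)) r)
                   <= (Cvh * K / nl + Chv * K) * K /\
                 Rabs (incidence_v (trunc_traj K (of_coord phi_ext)) r) <= (Cvh * K / nl + Chv * K) * K).
  { intros r.
    destruct (incidence_bound Nv_ext (trunc_traj K (of_coord phi_ext)) r K nl (conj Hnl (Nv_ext_low r)))
      as [H1 H2].
    { intros j. rewrite coord_trunc_traj. apply trunc_range. lra. }
    assert (0 <= Cvh * K / nl * K) by (apply Rmult_le_pos; [apply Rdiv_le_0_compat; nra|lra]).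
    assert (0 <= Chv * K * K) by (apply Rmult_le_pos; nra).
    rewrite !Rabs_right by lra. split; nra. }
  destruct (Hinc s) as [Ih0 Iv0]. destruct (Hinc (s - tau)) as [Ih1 _].
  apply (Rabs_rhs_le _ _ _ s _ _ Ih0 Ih1 Iv0). intros j.
  rewrite coord_of_coord, Rabs_right by (apply Rle_ge, phi_ext_range). apply phi_ext_range.
Qed.

Lemma trunc_incidence_nonneg w r :
  0 <= incidence_h Nv_ext (trunc_traj K w) r /\ 0 <= incidence_v (trunc_traj K w) r.
Proof.
  destruct K_facts as (HP0 & _ & _ & _ & _ & _ & _ & _ & _ & _ & HPK).
  destruct (incidence_bound Nv_ext (trunc_traj K w) r K nl (conj Hnl (Nv_ext_low r))) as [[H1 _] [H2 _]].
  - intros j. rewrite coord_trunc_traj. apply trunc_range. lra.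
  - now split.
Qed.

Section FixedPoint.
Variable u : idx -> R -> R.
Hypotheses (u_cont : forall i z, continuity_pt (u i) z)
  (u_fix : forall i t, u i t = phi_ext i t + RInt (rhs_trunc u i) 0 (Rmax 0 t)).

Let x := of_coord u.

Lemma fix_init i t : t <= 0 -> coord x i t = phi_ext i t.
Proof.
  intros Ht. unfold x. rewrite coord_of_coord, u_fix, Rmax_left by lra.
  rewrite RInt_point0. ring.
Qed.

Lemma fix_cont a i : cont_on_from a (coord x i).
Proof. unfold x. rewrite coord_of_coord. now apply cont_on_from_of_continuity. Qed.

Lemma fix_deriv i t : 0 < t -> derivable_pt_lim (coord x i) t (rhs_trunc u i t).
Proof.
  intros Ht. unfold x. rewrite coord_of_coord.
  apply (derivable_pt_lim_of_RInt_eq _ _ (phi_ext i 0)); [now apply rhs_trunc_cont|exact Ht|].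
  intros y Hy. rewrite u_fix, phi_ext_of_nonneg, Rmax_right by lra. reflexivity.
Qed.

Lemma fix_Nv r : Nv x r = Nv_ext r.
Proof.
  assert (E0 : Nv x 0 = N0 phi).
  { unfold Nv. change (coord x iSv 0 + coord x iIv 0 = N0 phi).
    rewrite !fix_init by lra. unfold phi_ext, N0. now rewrite Rmax_Rmin_clamp_id by lra. }
  destruct (Rle_dec r 0) as [Hr|Hr].
  - rewrite Nv_ext_of_nonpos by lra.
    exact (f_equal2 Rplus (fix_init iSv r Hr) (fix_init iIv r Hr)).
  - rewrite Nv_ext_of_nonneg by lra.
    apply (eq_Nv_explicit phi (Nv x)); [| |exact E0|lra].
    + apply cont_on_from_of_clamp. intros z. unfold Nv. apply continuity_pt_add;
        apply continuity_pt_clamp_from; [apply (fix_cont 0 iSv)|apply (fix_cont 0 iIv)].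
    + intros s Hs. replace (bv - mv * Nv x s) with (rhs_trunc u iSv s + rhs_trunc u iIv s)
        by (unfold rhs_trunc, Nv, x; simpl; ring).
      apply derivable_pt_lim_plus; [apply (fix_deriv iSv)|apply (fix_deriv iIv)]; exact Hs.
Qed.

Lemma fix_nonneg i r : 0 <= coord x i r.
Proof.
  destruct (Rle_dec r 0) as [Hr|Hr]; [rewrite fix_init by lra; apply phi_ext_range|].
  apply (stays_above _ (rhs_trunc u i) 0 0 r (fix_cont 0 i)); [exact (fix_deriv i)| |clear r Hr|lra].
  { rewrite fix_init by lra. apply phi_ext_range. }
  intros s Hs Hneg.
  destruct (trunc_incidence_nonneg x s) as [Ih0 Iv0].
  destruct (trunc_incidence_nonneg x (s - tau)) as [Ih1 _].
  unfold rhs_trunc, x, incidence_h, incidence_v in *.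
  destruct i; cbn [rhs coord of_coord trunc_traj Sh Ih Sv Iv] in *.
  - rewrite (trunc_nonpos K (u iSh s)) by lra. nra.
  - nra.
  - rewrite (trunc_nonpos K (u iSv s)) by lra. nra.
  - nra.
Qed.

Lemma fix_Sh_le r : Sh x r <= M1.
Proof.
  destruct K_facts as (HP0 & HPM1 & HbM1 & _).
  destruct (Rle_dec r 0) as [Hr|Hr].
  { change (coord x iSh r <= M1). rewrite fix_init by lra. assert (H := phi_ext_range iSh r). lra. }
  apply (stays_below _ (rhs_trunc u iSh) 0 M1 r (fix_cont 0 iSh)); [exact (fix_deriv iSh)| | |lra].
  - change (coord x iSh 0 <= M1). rewrite fix_init by lra. assert (H := phi_ext_range iSh 0). lra.
  - intros s Hs Hbig. destruct (trunc_incidence_nonneg x s) as [Hh _].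
    assert (mh * (bh / mh) <= mh * M1) by (apply Rmult_le_compat_l; lra).
    replace (mh * (bh / mh)) with bh in * by (field; lra).
    unfold rhs_trunc. cbn [rhs coord] in *. fold x. nra.
Qed.

Lemma fix_incidence_h_le r : incidence_h Nv_ext (trunc_traj K x) r <= Cvh * M1.
Proof.
  destruct K_facts as (HP0 & HPM1 & _ & _ & _ & _ & _ & HM1K & _).
  assert (HIv := fix_nonneg iIv r). assert (HSv := fix_nonneg iSv r). cbn [coord] in HIv, HSv.
  assert (HN : nl <= Nv x r) by (rewrite fix_Nv; apply Nv_ext_low).
  unfold incidence_h. cbn [trunc_traj Iv Sh]. rewrite <- fix_Nv. unfold Nv in *.
  assert (H1 : 0 <= trunc K (Iv x r) / (Sv x r + Iv x r) <= 1).
  { split; [apply Rdiv_le_0_compat; [apply trunc_range|]; lra|].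
    apply Rle_div_l; [lra|]. rewrite Rmult_1_l. apply trunc_le; lra. }
  assert (H2 : 0 <= trunc K (Sh x r) <= M1)
    by (split; [apply trunc_range|apply trunc_le, fix_Sh_le]; lra).
  apply Rmult_le_compat; [nra|lra|nra|lra].
Qed.

Lemma fix_Nv_le_M2 r : 0 <= r -> Sv x r + Iv x r <= M2.
Proof.
  intros Hr. destruct K_facts as (_ & _ & _ & HN0M2 & HbM2 & _).
  change (Nv x r <= M2). rewrite fix_Nv, Nv_ext_of_nonneg by exact Hr.
  assert (HB := Nv_explicit_between phi r Hr).
  assert (Rmax (N0 phi) (bv / mv) <= M2) by (apply Rmax_lub; lra). lra.
Qed.

Lemma fix_le_K i r : coord x i r <= K.
Proof.
  destruct K_facts as (HP0 & HPM1 & HbM1 & HN0M2 & HbM2 & HPM3 & HCM3 & HM1K & HM2K & HM3K & HPK).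
  destruct (Rle_dec r 0) as [Hr|Hr].
  { rewrite fix_init by lra. assert (H := phi_ext_range i r). lra. }
  destruct i.
  - assert (H := fix_Sh_le r). cbn [coord]. lra.
  - cut (Ih x r <= M3); [cbn [coord]; lra|].
    apply (stays_below _ (rhs_trunc u iIh) 0 M3 r (fix_cont 0 iIh)); [exact (fix_deriv iIh)| | |lra].
    + change (coord x iIh 0 <= M3). rewrite fix_init by lra. assert (H := phi_ext_range iIh 0). lra.
    + intros s Hs Hbig. assert (Hinc := fix_incidence_h_le (s - tau)).
      assert (mh * (Cvh * M1 / mh) <= mh * M3) by (apply Rmult_le_compat_l; lra).
      replace (mh * (Cvh * M1 / mh)) with (Cvh * M1) in * by (field; lra).
      unfold rhs_trunc. cbn [rhs coord] in *. fold x. nra.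
  - assert (HN := fix_Nv_le_M2 r ltac:(lra)). assert (HI := fix_nonneg iIv r).
    cbn [coord] in HI |- *. lra.
  - assert (HN := fix_Nv_le_M2 r ltac:(lra)). assert (HS := fix_nonneg iSv r).
    cbn [coord] in HS |- *. lra.
Qed.

Lemma fix_solution : solution phi x.
Proof.
  assert (Hid : forall i r, trunc K (coord x i r) = coord x i r)
    by (intros i r; apply trunc_id; split; [apply fix_nonneg|apply fix_le_K]).
  assert (Hh : forall r, incidence_h Nv_ext (trunc_traj K x) r = incidence_h (Nv x) x r).
  { intros r. unfold incidence_h. cbn [trunc_traj Sh Iv].
    rewrite (Hid iSh r : trunc K (Sh x r) = Sh x r), (Hid iIv r : trunc K (Iv x r) = Iv x r).
    now rewrite fix_Nv. }
  assert (Hv : forall r, incidence_v (trunc_traj K x) r = incidence_v x r).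
  { intros r. unfold incidence_v. cbn [trunc_traj Ih Sv].
    now rewrite (Hid iIh r : trunc K (Ih x r) = Ih x r), (Hid iSv r : trunc K (Sv x r) = Sv x r). }
  assert (HF : forall i t, rhs_trunc u i t = rhs_exact x i t).
  { intros i t. unfold rhs_trunc. fold x. destruct i; simpl rhs; now rewrite ?Hh, ?Hv. }
  split; [|split; [|split; [|split; [|split; [|split]]]]].
  - intros th Hth. assert (E : forall i, coord x i th = coord phi i th).
    { intros i. rewrite fix_init by lra. unfold phi_ext. now rewrite Rmax_Rmin_clamp_id. }
    exact (conj (E iSh) (conj (E iIh) (conj (E iSv) (E iIv)))).
  - exact (fix_cont _ iSh).
  - exact (fix_cont _ iIh).
  - exact (fix_cont _ iSv).
  - exact (fix_cont _ iIv).
  - intros t _. change (Nv x t <> 0). rewrite fix_Nv. assert (H := Nv_ext_low t). lra.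
  - intros t Ht.
    assert (D : forall i, derivable_pt_lim (coord x i) t (rhs_exact x i t))
      by (intros i; rewrite <- HF; now apply fix_deriv).
    exact (conj (D iSh) (conj (D iIh) (conj (D iSv) (D iIv)))).
Qed.

End FixedPoint.

Lemma truncated_solution_exists : exists x, solution phi x /\ forall i r, 0 <= coord x i r.
Proof.
  destruct K_facts as (HP0 & _ & _ & _ & _ & _ & _ & _ & _ & _ & HPK).
  assert (HLam := trunc_lip_const_nonneg).
  destruct (delay_picard_fixed_point idx all_idx tau (Cvh * K / nl + Chv * K + mh + mv)
    (bh + bv + (Cvh * K / nl + Chv * K) * K + (mh + mv) * P) in_all_idx Htau ltac:(lra)
    ltac:(nra) phi_ext phi_ext_cont rhs_trunc rhs_trunc_cont rhs_trunc_lip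
    (fun i s _ => rhs_trunc_phi_ext_bounded i s))
    as [u [Hcont Hfix]].
  exists (of_coord u). split; [now apply fix_solution|now apply fix_nonneg].
Qed.

End Truncation.

Lemma init_bounded phi : in_Cplus tau phi ->
  exists P, forall i th, - tau <= th <= 0 -> coord phi i th <= P.
Proof.
  intros (C1 & C2 & C3 & C4 & _).
  destruct (cont_on_interval_bounded (- tau) 0 _ ltac:(lra) C1) as [P1 B1].
  destruct (cont_on_interval_bounded (- tau) 0 _ ltac:(lra) C2) as [P2 B2].
  destruct (cont_on_interval_bounded (- tau) 0 _ ltac:(lra) C3) as [P3 B3].
  destruct (cont_on_interval_bounded (- tau) 0 _ ltac:(lra) C4) as [P4 B4].
  exists (Rmax (Rmax P1 P2) (Rmax P3 P4)). intros i th Hth.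
  assert (M1 := Rmax_l P1 P2). assert (M2 := Rmax_r P1 P2). assert (M3 := Rmax_l P3 P4).
  assert (M4 := Rmax_r P3 P4). assert (M5 := Rmax_l (Rmax P1 P2) (Rmax P3 P4)).
  assert (M6 := Rmax_r (Rmax P1 P2) (Rmax P3 P4)).
  destruct i; simpl;
    [specialize (B1 th Hth)|specialize (B2 th Hth)|specialize (B3 th Hth)|specialize (B4 th Hth)]; lra.
Qed.

Lemma solution_exists phi : in_Cplus tau phi -> exists x, solution phi x /\ forall i r, 0 <= coord x i r.
Proof.
  intros Hphi. destruct (init_bounded phi Hphi) as [P HP].
  destruct (Nv_lower_bound phi Hphi) as [nl [Hnl [Hl1 Hl2]]].
  exact (truncated_solution_exists phi Hphi P nl HP Hnl Hl1 Hl2).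
Qed.

Lemma solution_nonneg phi x : in_Cplus tau phi -> solution phi x ->
  forall i t, - tau <= t -> 0 <= coord x i t.
Proof.
  intros Hphi Hx i t Ht. destruct (solution_exists phi Hphi) as [y [Hy Hpos]].
  rewrite (solution_unique phi x y Hphi Hx Hy i t Ht). apply Hpos.
Qed.

Definition ultimate_bound := bh / mh + bv / mv + Cvh * (bh / mh + 1) / mh + 2.

Lemma ultimate_bound_pos : 0 < ultimate_bound.
Proof.
  unfold ultimate_bound.
  assert (0 <= bh / mh) by (apply Rdiv_le_0_compat; lra).
  assert (0 <= bv / mv) by (apply Rdiv_le_0_compat; lra).
  assert (0 <= Cvh * (bh / mh + 1) / mh) by (apply Rdiv_le_0_compat; nra). lra.
Qed.

Section UltimateBounds.
Variables (phi x : traj).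
Hypotheses (Hx : solution phi x) (Hpos : forall i t, - tau <= t -> 0 <= coord x i t).

Lemma incidence_h_between r : - tau <= r -> 0 <= incidence_h (Nv x) x r <= Cvh * Sh x r.
Proof.
  intros Hr. assert (HN := solution_Nv_pos phi x Hx Hpos r Hr).
  assert (H1 := Hpos iSh r Hr). assert (H3 := Hpos iSv r Hr). assert (H4 := Hpos iIv r Hr).
  unfold incidence_h, Nv in *. simpl in H1, H3, H4.
  assert (Hq : 0 <= Iv x r / (Sv x r + Iv x r) <= 1)
    by (split; [apply Rdiv_le_0_compat|apply Rle_div_l]; lra).
  replace (Cvh * (Iv x r / (Sv x r + Iv x r)) * Sh x r)
    with (Iv x r / (Sv x r + Iv x r) * (Cvh * Sh x r)) by ring.
  assert (0 <= Cvh * Sh x r) by nra. split; nra.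
Qed.

Lemma Sh_ultimately_le : exists T, 0 <= T /\ forall t, T <= t -> Sh x t <= bh / mh + 1.
Proof.
  exists (0 + Rabs (Sh x 0) / mh).
  split; [assert (0 <= Rabs (Sh x 0) / mh) by (apply Rdiv_le_0_compat; [apply Rabs_pos|lra]); lra|].
  intros t Ht.
  apply (ultimately_le_of_dissipative _ (rhs_exact x iSh) mh (bh / mh) 0
    (Rabs (Sh x 0))); [lra|apply Rabs_pos|apply (solution_cont_from phi x 0 Hx ltac:(lra) iSh)
    |exact (solution_deriv phi x Hx iSh)| | |exact Ht].
  - intros y Hy. cbn [rhs_exact rhs]. assert (H := incidence_h_between y ltac:(lra)).
    replace (mh * (bh / mh - Sh x y)) with (bh - mh * Sh x y) by (field; lra). lra.
  - assert (H := Rle_abs (Sh x 0)). assert (0 <= bh / mh) by (apply Rdiv_le_0_compat; lra). lra.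
Qed.

(* [I_h] is fed by [S_h] one delay earlier, so its bound sets in [tau] after
   that of [S_h]. *)
Lemma Ih_ultimately_le :
  exists T, 0 <= T /\ forall t, T <= t -> Ih x t <= Cvh * (bh / mh + 1) / mh + 1.
Proof.
  destruct Sh_ultimately_le as [T1 [HT1 HSh]].
  set (T0 := T1 + tau). assert (HT0 : T1 + tau <= T0) by (unfold T0; lra).
  assert (Hq : 0 <= Cvh * (bh / mh + 1) / mh)
    by (assert (0 <= bh / mh) by (apply Rdiv_le_0_compat; lra); apply Rdiv_le_0_compat; nra).
  exists (T0 + Rabs (Ih x T0) / mh).
  split; [assert (0 <= Rabs (Ih x T0) / mh) by (apply Rdiv_le_0_compat; [apply Rabs_pos|lra]); lra|].
  intros t Ht.
  apply (ultimately_le_of_dissipative _ (rhs_exact x iIh) mh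
    (Cvh * (bh / mh + 1) / mh) T0 (Rabs (Ih x T0)));
    [lra|apply Rabs_pos|apply (solution_cont_from phi x T0 Hx ltac:(lra) iIh)
    |intros y Hy; apply (solution_deriv phi x Hx iIh); lra| | |exact Ht].
  - intros y Hy. cbn [rhs_exact rhs].
    assert (H := incidence_h_between (y - tau) ltac:(lra)). assert (HS := HSh (y - tau) ltac:(lra)).
    replace (mh * (Cvh * (bh / mh + 1) / mh - Ih x y)) with (Cvh * (bh / mh + 1) - mh * Ih x y)
      by (field; lra). nra.
  - assert (H := Rle_abs (Ih x T0)). lra.
Qed.

Lemma Nv_ultimately_le : exists T, 0 <= T /\ forall t, T <= t -> Nv x t <= bv / mv + 1.
Proof.
  exists (0 + Rabs (Nv x 0) / mv).
  split; [assert (0 <= Rabs (Nv x 0) / mv) by (apply Rdiv_le_0_compat; [apply Rabs_pos|lra]); lra|].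
  intros t Ht.
  apply (ultimately_le_of_dissipative _ (fun s => bv - mv * Nv x s) mv (bv / mv) 0 (Rabs (Nv x 0)));
    [lra|apply Rabs_pos|apply (solution_Nv_cont phi x 0 Hx ltac:(lra))|exact (solution_Nv_deriv phi x Hx)
    | | |exact Ht].
  - intros y Hy. replace (mv * (bv / mv - Nv x y)) with (bv - mv * Nv x y) by (field; lra). lra.
  - assert (H := Rle_abs (Nv x 0)). assert (0 <= bv / mv) by (apply Rdiv_le_0_compat; lra). lra.
Qed.

Lemma ultimately_bounded :
  exists T, 0 <= T /\ forall i t, T <= t -> Rabs (coord x i t) <= ultimate_bound.
Proof.
  destruct Sh_ultimately_le as [T1 [HT1 HSh]].
  destruct Ih_ultimately_le as [T2 [HT2 HIh]].
  destruct Nv_ultimately_le as [T3 [HT3 HNv]].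
  assert (0 <= bh / mh) by (apply Rdiv_le_0_compat; lra).
  assert (0 <= bv / mv) by (apply Rdiv_le_0_compat; lra).
  assert (0 <= Cvh * (bh / mh + 1) / mh) by (apply Rdiv_le_0_compat; nra).
  exists (T1 + T2 + T3). split; [lra|]. intros i t Ht.
  assert (Hc : 0 <= coord x i t) by (apply Hpos; lra). rewrite Rabs_right by lra.
  assert (HN := HNv t ltac:(lra)). assert (HSv := Hpos iSv t ltac:(lra)).
  assert (HIv := Hpos iIv t ltac:(lra)). unfold Nv in HN. simpl in HSv, HIv.
  unfold ultimate_bound. destruct i; simpl.
  - assert (HS := HSh t ltac:(lra)). lra.
  - assert (HI := HIh t ltac:(lra)). lra.
  - lra.
  - lra.
Qed.

End UltimateBounds.

End Model.

Theorem theorem1 (bh bv mh mv Cvh Chv tau : R)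
  (Hbh : 0 < bh) (Hbv : 0 < bv) (Hmh : 0 < mh) (Hmv : 0 < mv)
  (HCvh : 0 < Cvh) (HChv : 0 < Chv) (Htau : 0 <= tau) :
  (forall phi : traj, in_Cplus tau phi ->
     (* existence on [0, +oo) *)
     (exists x : traj, is_solution bh bv mh mv Cvh Chv tau phi x) /\
     (* uniqueness *)
     (forall x y : traj,
        is_solution bh bv mh mv Cvh Chv tau phi x ->
        is_solution bh bv mh mv Cvh Chv tau phi y ->
        forall t, - tau <= t ->
          Sh x t = Sh y t /\ Ih x t = Ih y t /\ Sv x t = Sv y t /\ Iv x t = Iv y t) /\
     (* nonnegativity *)
     (forall x : traj, is_solution bh bv mh mv Cvh Chv tau phi x ->
        forall t, 0 <= t ->
          0 <= Sh x t /\ 0 <= Ih x t /\ 0 <= Sv x t /\ 0 <= Iv x t)) /\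
  (* ultimate boundedness: a bound B, uniform in the initial data *)
  (exists B : R, 0 < B /\
     forall phi : traj, in_Cplus tau phi ->
     forall x : traj, is_solution bh bv mh mv Cvh Chv tau phi x ->
     exists T : R, 0 <= T /\ forall t, T <= t ->
       Rabs (Sh x t) <= B /\ Rabs (Ih x t) <= B /\
       Rabs (Sv x t) <= B /\ Rabs (Iv x t) <= B).
Proof.
  split.
  - intros phi Hphi. split; [|split].
    + destruct (solution_exists bh bv mh mv Cvh Chv tau Hbh Hbv Hmh Hmv HCvh HChv Htau phi Hphi)
        as [x [Hx _]].
      now exists x.
    + intros x y Hx Hy t Ht.
      assert (E := fun i => solution_unique bh bv mh mv Cvh Chv tau Hbv Hmh Hmv HCvh HChv Htau
        phi x y Hphi Hx Hy i t Ht).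
      exact (conj (E iSh) (conj (E iIh) (conj (E iSv) (E iIv)))).
    + intros x Hx t Ht.
      assert (N := fun i => solution_nonneg bh bv mh mv Cvh Chv tau Hbh Hbv Hmh Hmv HCvh HChv Htau
        phi x Hphi Hx i t ltac:(lra)).
      exact (conj (N iSh) (conj (N iIh) (conj (N iSv) (N iIv)))).
  - exists (ultimate_bound bh bv mh mv Cvh).
    split; [now apply ultimate_bound_pos|].
    intros phi Hphi x Hx.
    destruct (ultimately_bounded bh bv mh mv Cvh Chv tau Hbh Hbv Hmh Hmv HCvh Htau phi x Hx
      (solution_nonneg bh bv mh mv Cvh Chv tau Hbh Hbv Hmh Hmv HCvh HChv Htau phi x Hphi Hx))
      as [T [HT HB]].
    exists T. split; [exact HT|]. intros t Ht.
    exact (conj (HB iSh t Ht) (conj (HB iIh t Ht) (conj (HB iSv t Ht) (HB iIv t Ht)))).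
Qed.
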